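(* For real $\alpha,\beta$, the inequalities $M_{\alpha }\left( 1,\cos x;\tfrac{2}{3}\right) <\frac{\sin x}{x}<M_{\beta}\left( 1,\cos x;\tfrac{2}{3}\right)$ hold for all $x\in(0,\pi/2)$ if and only if $\alpha \leq 4/5$ and $\beta \geq \frac{\ln 3-\ln 2}{\ln \pi -\ln 2}$.
   Context: For $a,b>0$ and $w\in(0,1)$, the weighted power mean is $M_{r}(a,b;w)=\left( wa^{r}+(1-w) b^{r}\right)^{1/r}$ if $r\neq 0$ and $M_{0}(a,b;w)=a^{w}b^{1-w}$. *)

From Stdlib Require Import Reals.
Open Scope R_scope.

(* Weighted power mean M_r(a,b;w) for a,b>0, w in (0,1):
   (w a^r + (1-w) b^r)^(1/r) if r <> 0, and a^w b^(1-w) if r = 0.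
   Real powers via Rpower (= exp (y * ln x)), valid for positive bases. *)
Definition power_mean (r a b w : R) : R :=
  if Req_EM_T r 0 then Rpower a w * Rpower b (1 - w)
  else Rpower (w * Rpower a r + (1 - w) * Rpower b r) (1 / r).

(* Write s = sin x / x and c = cos x. For r > 0, M_r(1, c; 2/3) < s iff
   Phi r x := r ln s - ln ((2 + c^r) / 3) > 0, and Phi r x tends to 0 as x -> 0+.
   The x-derivative of Phi r has the sign of c^r (x - sin x cos x) - 2 c (sin x - x cos x).
   For r = 4/5 this is positive on all of (0, PI/2), because its logarithmic form
   increases from 0; so Phi (4/5) > 0, while for r > 4/5 the derivative is negative
   near 0 and Phi r turns negative. For p = ln (3/2) / ln (PI/2) one also has
   Phi p x -> 0 as x -> PI/2-, and Phi p < 0: it decreases near 0, increases near PI/2,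
   and is bounded pointwise in between. Power means increase with r, which gives the
   other exponents; for beta < p the inequality fails near PI/2, for beta <= 0 at x = 3/2.
   The needed inequalities between x, sin x and cos x are certified by interval
   arithmetic on rational Taylor models, evaluated with vm_compute. *)

From Stdlib Require Import Reals QArith Qreals Qround ZArith List Lia Lra.
From Coquelicot Require Import Coquelicot.
Import ListNotations.
Open Scope R_scope.

(** * Certified enclosures of trigonometric expressions *)

Fixpoint peval (l : list R) (t : R) : R :=
  match l with [] => 0 | c :: l' => c + t * peval l' t end.

Lemma peval_app l1 l2 t : peval (l1 ++ l2) t = peval l1 t + t ^ length l1 * peval l2 t.
Proof. induction l1 as [|a l1 IH]; simpl; [ring | rewrite IH; ring]. Qed.

Lemma peval_opp cs t : peval (map Ropp cs) t = - peval cs t.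
Proof. induction cs as [|c cs IH]; simpl; [ring | rewrite IH; ring]. Qed.

Lemma peval_scale a q t : peval (map (Rmult a) q) t = a * peval q t.
Proof. induction q as [|b q IH]; simpl; [ring | rewrite IH; ring]. Qed.

Fixpoint poly_add (p q : list R) : list R :=
  match p, q with
  | [], q => q
  | p, [] => p
  | a :: p', b :: q' => (a + b) :: poly_add p' q'
  end.

Lemma peval_poly_add p q t : peval (poly_add p q) t = peval p t + peval q t.
Proof. revert q; induction p as [|a p IH]; intros [|b q]; simpl; try ring. rewrite IH; ring. Qed.

Fixpoint poly_mul (p q : list R) : list R :=
  match p with [] => [] | a :: p' => poly_add (map (Rmult a) q) (0 :: poly_mul p' q) end.

Lemma peval_poly_mul p q t : peval (poly_mul p q) t = peval p t * peval q t.
Proof.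
  induction p as [|a p IH]; simpl; [ring |].
  rewrite peval_poly_add, peval_scale; simpl. rewrite IH; ring.
Qed.

Lemma peval_nonneg l t : 0 <= t -> List.Forall (fun a => 0 <= a) l -> 0 <= peval l t.
Proof.
  intros Ht H; induction H; simpl; [lra |].
  apply Rplus_le_le_0_compat; auto. apply Rmult_le_pos; auto.
Qed.

Lemma peval_le_mono l t h : 0 <= t <= h -> List.Forall (fun a => 0 <= a) l -> peval l t <= peval l h.
Proof.
  intros Ht H; induction H; simpl; [lra |].
  assert (0 <= peval l t) by (apply peval_nonneg; auto; lra).
  assert (t * peval l t <= h * peval l h) by (apply Rmult_le_compat; lra).
  lra.
Qed.

Definition itv := (Q * Q)%type.
Definition in_itv (c : R) (i : itv) := Q2R (fst i) <= c <= Q2R (snd i).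

Lemma Q2R_0 : Q2R 0 = 0. Proof. unfold Q2R; simpl; field. Qed.
Lemma Q2R_1 : Q2R 1 = 1. Proof. unfold Q2R; simpl; field. Qed.

Lemma in_itv_0 : in_itv 0 (0, 0)%Q.
Proof. unfold in_itv; simpl; rewrite Q2R_0; lra. Qed.

(* Endpoints are rounded to the grid 2^-60, which keeps the denominators of the
   computation bounded. *)
Definition grid : positive := 1152921504606846976%positive.
Definition round_down (q : Q) : Q := Qmake (Qfloor (q * (Zpos grid # 1))) grid.
Definition round_up (q : Q) : Q := Qmake (Qceiling (q * (Zpos grid # 1))) grid.

Lemma Q2R_make z p : Q2R (Qmake z p) = IZR z / IZR (Zpos p).
Proof. reflexivity. Qed.

Lemma Q2R_mul_grid q : Q2R (q * (Zpos grid # 1)) = Q2R q * IZR (Zpos grid).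
Proof. rewrite Q2R_mult, Q2R_make. field. Qed.

Lemma round_down_le q : Q2R (round_down q) <= Q2R q.
Proof.
  unfold round_down. rewrite Q2R_make.
  pose proof (Qle_Rle _ _ (Qfloor_le (q * (Zpos grid # 1)))) as H.
  rewrite Q2R_mul_grid in H. unfold inject_Z in H. rewrite Q2R_make in H.
  assert (0 < IZR (Zpos grid)) by (apply IZR_lt; reflexivity).
  apply (Rmult_le_reg_r (IZR (Zpos grid))); auto.
  unfold Rdiv in *; rewrite Rmult_assoc, Rinv_l by lra. lra.
Qed.

Lemma round_up_ge q : Q2R q <= Q2R (round_up q).
Proof.
  unfold round_up. rewrite Q2R_make.
  pose proof (Qle_Rle _ _ (Qle_ceiling (q * (Zpos grid # 1)))) as H.
  rewrite Q2R_mul_grid in H. unfold inject_Z in H. rewrite Q2R_make in H.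
  assert (0 < IZR (Zpos grid)) by (apply IZR_lt; reflexivity).
  apply (Rmult_le_reg_r (IZR (Zpos grid))); auto.
  unfold Rdiv in *; rewrite Rmult_assoc, Rinv_l by lra. lra.
Qed.

Definition mk_itv (lo hi : Q) : itv :=
  if Qeq_bool lo hi then (Qred lo, Qred lo) else (round_down lo, round_up hi).

Lemma mk_itv_correct c lo hi : Q2R lo <= c <= Q2R hi -> in_itv c (mk_itv lo hi).
Proof.
  intros [H1 H2]. unfold mk_itv, in_itv.
  destruct (Qeq_bool lo hi) eqn:E; simpl.
  - apply Qeq_bool_iff, Qeq_eqR in E.
    rewrite !(Qeq_eqR _ _ (Qred_correct lo)). lra.
  - pose proof (round_down_le lo); pose proof (round_up_ge hi); lra.
Qed.

Definition qmin (a b : Q) := if Qle_bool a b then a else b.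
Definition qmax (a b : Q) := if Qle_bool a b then b else a.

Lemma Qle_bool_false_Rlt a b : Qle_bool a b = false -> Q2R b < Q2R a.
Proof.
  intros E. apply Qlt_Rlt, Qnot_le_lt.
  intros H; apply Qle_bool_iff in H; congruence.
Qed.

Lemma Q2R_qmin a b : Q2R (qmin a b) = Rmin (Q2R a) (Q2R b).
Proof.
  unfold qmin. destruct (Qle_bool a b) eqn:E.
  - apply Qle_bool_iff, Qle_Rle in E. rewrite Rmin_left; auto.
  - apply Qle_bool_false_Rlt in E. rewrite Rmin_right; lra.
Qed.

Lemma Q2R_qmax a b : Q2R (qmax a b) = Rmax (Q2R a) (Q2R b).
Proof.
  unfold qmax. destruct (Qle_bool a b) eqn:E.
  - apply Qle_bool_iff, Qle_Rle in E. rewrite Rmax_right; auto.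
  - apply Qle_bool_false_Rlt in E. rewrite Rmax_left; lra.
Qed.

Definition itv_add (i j : itv) : itv := mk_itv (fst i + fst j) (snd i + snd j).
Definition itv_opp (i : itv) : itv := (- snd i, - fst i)%Q.
Definition itv_mul (i j : itv) : itv :=
  let '(a, b) := i in let '(c, d) := j in
  let p1 := (a * c)%Q in let p2 := (a * d)%Q in let p3 := (b * c)%Q in let p4 := (b * d)%Q in
  mk_itv (qmin (qmin p1 p2) (qmin p3 p4)) (qmax (qmax p1 p2) (qmax p3 p4)).

Lemma itv_add_correct x y i j : in_itv x i -> in_itv y j -> in_itv (x + y) (itv_add i j).
Proof. unfold in_itv, itv_add; intros; apply mk_itv_correct; rewrite !Q2R_plus; lra. Qed.

Lemma itv_opp_correct x i : in_itv x i -> in_itv (- x) (itv_opp i).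
Proof. unfold in_itv, itv_opp; simpl; rewrite !Q2R_opp; lra. Qed.

Lemma Rmult_between x y a b : a <= x <= b -> Rmin (a * y) (b * y) <= x * y <= Rmax (a * y) (b * y).
Proof.
  intros H. pose proof (Rmin_l (a * y) (b * y)); pose proof (Rmin_r (a * y) (b * y)).
  pose proof (Rmax_l (a * y) (b * y)); pose proof (Rmax_r (a * y) (b * y)).
  destruct (Rle_dec 0 y); split; nra.
Qed.

Lemma itv_mul_correct x y i j : in_itv x i -> in_itv y j -> in_itv (x * y) (itv_mul i j).
Proof.
  destruct i as [a b], j as [c d]; unfold in_itv, itv_mul; simpl; intros Hx Hy.
  apply mk_itv_correct. rewrite !Q2R_qmin, !Q2R_qmax, !Q2R_mult.
  set (a' := Q2R a) in *; set (b' := Q2R b) in *; set (c' := Q2R c) in *; set (d' := Q2R d) in *.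
  pose proof (Rmult_between _ y _ _ Hx) as [H1 H2].
  pose proof (Rmult_between _ a' _ _ Hy) as [H3 H4].
  pose proof (Rmult_between _ b' _ _ Hy) as [H5 H6].
  rewrite !(Rmult_comm _ a') in H3, H4. rewrite !(Rmult_comm _ b') in H5, H6.
  pose proof (Rmin_l (a' * c') (a' * d')); pose proof (Rmin_r (a' * c') (a' * d')).
  pose proof (Rmin_l (b' * c') (b' * d')); pose proof (Rmin_r (b' * c') (b' * d')).
  pose proof (Rmax_l (a' * c') (a' * d')); pose proof (Rmax_r (a' * c') (a' * d')).
  pose proof (Rmax_l (b' * c') (b' * d')); pose proof (Rmax_r (b' * c') (b' * d')).
  split.
  - apply Rle_trans with (Rmin (a' * y) (b' * y)); [| exact H1].
    apply Rmin_glb; [apply Rle_trans with (Rmin (a' * c') (a' * d')) | apply Rle_trans with (Rmin (b' * c') (b' * d'))];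
      auto; [apply Rmin_l | apply Rmin_r].
  - apply Rle_trans with (Rmax (a' * y) (b' * y)); [exact H2 |].
    apply Rmax_lub; [apply Rle_trans with (Rmax (a' * c') (a' * d')) | apply Rle_trans with (Rmax (b' * c') (b' * d'))];
      auto; [apply Rmax_l | apply Rmax_r].
Qed.

Definition tm_encloses (p : list itv) (t v : R) := exists cs, Forall2 in_itv cs p /\ v = peval cs t.

Fixpoint tm_add (p q : list itv) : list itv :=
  match p, q with
  | [], q => q
  | p, [] => p
  | a :: p', b :: q' => itv_add a b :: tm_add p' q'
  end.
Definition tm_opp (p : list itv) := map itv_opp p.
Definition tm_scale (a : itv) (q : list itv) := map (itv_mul a) q.
Fixpoint tm_mul (p q : list itv) : list itv :=
  match p with [] => [] | a :: p' => tm_add (tm_scale a q) ((0, 0)%Q :: tm_mul p' q) end.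
Fixpoint itv_horner (h : Q) (l : list itv) : itv :=
  match l with [] => (0, 0)%Q | a :: l' => itv_add a (itv_mul (0, h)%Q (itv_horner h l')) end.
(* Keeps degree [d]: the tail is bounded by Horner over [[0, h]] and folded into
   the coefficient of [t^d]. *)
Definition tm_truncate (d : nat) (h : Q) (p : list itv) := firstn d p ++ [itv_horner h (skipn d p)].

Lemma tm_add_correct cs ds p q :
  Forall2 in_itv cs p -> Forall2 in_itv ds q -> Forall2 in_itv (poly_add cs ds) (tm_add p q).
Proof.
  intros H; revert ds q; induction H as [|c a cs p Hca Hcs IH]; intros ds q Hd; simpl; auto.
  destruct Hd; simpl; constructor; auto. apply itv_add_correct; auto.
Qed.

Lemma tm_opp_correct cs p : Forall2 in_itv cs p -> Forall2 in_itv (map Ropp cs) (tm_opp p).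
Proof. induction 1; simpl; constructor; auto. apply itv_opp_correct; auto. Qed.

Lemma tm_scale_correct c a ds q :
  in_itv c a -> Forall2 in_itv ds q -> Forall2 in_itv (map (Rmult c) ds) (tm_scale a q).
Proof. intros Hc; induction 1; simpl; constructor; auto. apply itv_mul_correct; auto. Qed.

Lemma tm_mul_correct cs ds p q :
  Forall2 in_itv cs p -> Forall2 in_itv ds q -> Forall2 in_itv (poly_mul cs ds) (tm_mul p q).
Proof.
  induction 1; intros Hd; simpl; [constructor |].
  apply tm_add_correct; [apply tm_scale_correct; auto |]. constructor; [apply in_itv_0 | auto].
Qed.

Lemma itv_horner_correct h cs l t :
  Forall2 in_itv cs l -> 0 <= t <= Q2R h -> in_itv (peval cs t) (itv_horner h l).
Proof.
  intros H Ht; induction H; cbn [peval itv_horner]; [apply in_itv_0 |].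
  apply itv_add_correct; auto. apply (itv_mul_correct t _ (0, h)%Q); auto.
  unfold in_itv; simpl; rewrite Q2R_0; lra.
Qed.

Lemma Forall2_firstn {A B} (P : A -> B -> Prop) d l1 l2 :
  Forall2 P l1 l2 -> Forall2 P (firstn d l1) (firstn d l2).
Proof. revert l1 l2; induction d; intros l1 l2 H; simpl; [constructor |]. destruct H; simpl; constructor; auto. Qed.

Lemma Forall2_skipn {A B} (P : A -> B -> Prop) d l1 l2 :
  Forall2 P l1 l2 -> Forall2 P (skipn d l1) (skipn d l2).
Proof. revert l1 l2; induction d; intros l1 l2 H; simpl; auto. destruct H; simpl; [constructor | auto]. Qed.

Lemma tm_encloses_const q t : tm_encloses [(q, q)] t (Q2R q).
Proof. exists [Q2R q]. split; [constructor; [unfold in_itv; simpl; lra | constructor] | simpl; ring]. Qed.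

Lemma tm_encloses_add p q t x y :
  tm_encloses p t x -> tm_encloses q t y -> tm_encloses (tm_add p q) t (x + y).
Proof.
  intros [cs [H1 ->]] [ds [H2 ->]]. exists (poly_add cs ds).
  split; [apply tm_add_correct; auto | rewrite peval_poly_add; auto].
Qed.

Lemma tm_encloses_opp p t x : tm_encloses p t x -> tm_encloses (tm_opp p) t (- x).
Proof.
  intros [cs [H1 ->]]. exists (map Ropp cs).
  split; [apply tm_opp_correct; auto | rewrite peval_opp; auto].
Qed.

Lemma tm_encloses_scale c a q t y : in_itv c a -> tm_encloses q t y -> tm_encloses (tm_scale a q) t (c * y).
Proof.
  intros Hc [ds [H ->]]. exists (map (Rmult c) ds).
  split; [apply tm_scale_correct; auto | rewrite peval_scale; auto].
Qed.

Lemma tm_encloses_mul p q t x y :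
  tm_encloses p t x -> tm_encloses q t y -> tm_encloses (tm_mul p q) t (x * y).
Proof.
  intros [cs [H1 ->]] [ds [H2 ->]]. exists (poly_mul cs ds).
  split; [apply tm_mul_correct; auto | rewrite peval_poly_mul; auto].
Qed.

Lemma tm_encloses_truncate d h p t x :
  0 <= t <= Q2R h -> tm_encloses p t x -> tm_encloses (tm_truncate d h p) t x.
Proof.
  intros Ht [cs [H1 ->]]. exists (firstn d cs ++ [peval (skipn d cs) t]). split.
  - apply Forall2_app; [apply Forall2_firstn; auto |].
    constructor; [apply itv_horner_correct; auto; apply Forall2_skipn; auto | constructor].
  - rewrite peval_app. simpl. rewrite <- (firstn_skipn d cs) at 1. rewrite peval_app. ring.
Qed.

Definition tm_of_bounds (L U : list Q) : list itv :=
  map (fun lu => (qmin (fst lu) (snd lu), qmax (fst lu) (snd lu))) (combine L U).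

(* A value between two polynomials is a convex combination of them, hence the
   value of the polynomial whose coefficients are the same convex combination. *)
Lemma tm_encloses_between L U t v : length L = length U ->
  peval (map Q2R L) t <= v <= peval (map Q2R U) t -> tm_encloses (tm_of_bounds L U) t v.
Proof.
  intros Hlen Hv.
  set (PL := peval (map Q2R L) t) in *. set (PU := peval (map Q2R U) t) in *.
  assert (exists th, 0 <= th <= 1 /\ v = PL + th * (PU - PL)) as [th [Hth ->]].
  { destruct (Req_dec PU PL) as [E | E].
    - exists 0; split; lra.
    - exists ((v - PL) / (PU - PL)). assert (0 < PU - PL) by lra. split.
      + split; [apply Rdiv_le_0_compat; lra |].
        apply (Rmult_le_reg_r (PU - PL)); auto. unfold Rdiv; rewrite Rmult_assoc, Rinv_l; lra.
      + field. lra. }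
  exists (map (fun lu => Q2R (fst lu) + th * (Q2R (snd lu) - Q2R (fst lu))) (combine L U)).
  unfold PL, PU; clear PL PU Hv. split.
  - revert U Hlen; induction L as [|l L IH]; intros [|u U] Hlen; simpl in *; try discriminate;
      constructor; auto.
    unfold in_itv; simpl; rewrite Q2R_qmin, Q2R_qmax.
    destruct (Rle_dec (Q2R l) (Q2R u)).
    + rewrite Rmin_left, Rmax_right by lra. nra.
    + rewrite Rmin_right, Rmax_left by lra. nra.
  - revert U Hlen; induction L as [|l L IH]; intros [|u U] Hlen; simpl in *; try discriminate; [ring |].
    rewrite <- IH by lia. ring.
Qed.

Lemma tm_lower_le p t v : 0 <= t -> tm_encloses p t v -> peval (map (fun i => Q2R (fst i)) p) t <= v.
Proof.
  intros Ht [cs [H ->]]. induction H as [|c a cs p [Hlo Hhi] Hcs IH]; simpl; [lra |].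
  assert (0 <= t * (peval cs t - peval (map (fun i => Q2R (fst i)) p) t)) by (apply Rmult_le_pos; lra).
  nra.
Qed.

Lemma tm_upper_ge p t v : 0 <= t -> tm_encloses p t v -> v <= peval (map (fun i => Q2R (snd i)) p) t.
Proof.
  intros Ht [cs [H ->]]. induction H as [|c a cs p [Hlo Hhi] Hcs IH]; simpl; [lra |].
  assert (0 <= t * (peval (map (fun i => Q2R (snd i)) p) t - peval cs t)) by (apply Rmult_le_pos; lra).
  nra.
Qed.

Fixpoint fact_pos (n : nat) : positive :=
  match n with O => 1%positive | S k => (Pos.of_succ_nat k * fact_pos k)%positive end.

Lemma IZR_fact_pos n : IZR (Zpos (fact_pos n)) = INR (fact n).
Proof.
  induction n as [|k IH]; [reflexivity |].
  change (fact (S k)) with (S k * fact k)%nat.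
  rewrite mult_INR, <- IH. simpl fact_pos. rewrite Pos2Z.inj_mul, mult_IZR.
  rewrite Zpos_P_of_succ_nat, <- Nat2Z.inj_succ, <- INR_IZR_INZ. reflexivity.
Qed.

Fixpoint alt_sign (i : nat) : Z := match i with O => 1%Z | S k => (- alt_sign k)%Z end.

Lemma IZR_alt_sign i : IZR (alt_sign i) = (-1) ^ i.
Proof. induction i; simpl; [reflexivity |]. rewrite opp_IZR, IHi. ring. Qed.

Definition sin_coeff (i : nat) : Q := Qmake (alt_sign i) (fact_pos (2 * i + 1)).
Definition cos_coeff (i : nat) : Q := Qmake (alt_sign i) (fact_pos (2 * i)).

Fixpoint sin_taylor (n : nat) : list Q :=
  match n with O => [0%Q; sin_coeff 0] | S k => sin_taylor k ++ [0%Q; sin_coeff (S k)] end.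
Fixpoint cos_taylor (n : nat) : list Q :=
  match n with O => [cos_coeff 0] | S k => cos_taylor k ++ [0%Q; cos_coeff (S k)] end.

Lemma length_sin_taylor n : length (sin_taylor n) = (2 * n + 2)%nat.
Proof. induction n; simpl; auto. rewrite length_app, IHn; simpl; lia. Qed.

Lemma length_cos_taylor n : length (cos_taylor n) = (2 * n + 1)%nat.
Proof. induction n; simpl; auto. rewrite length_app, IHn; simpl; lia. Qed.

Lemma peval_sin_taylor n a : peval (map Q2R (sin_taylor n)) a = sin_approx a n.
Proof.
  induction n as [|n IH].
  - unfold sin_approx, sin_term; simpl. unfold sin_coeff; rewrite Q2R_make. unfold Q2R; simpl. field.
  - simpl sin_taylor. rewrite map_app, peval_app, IH, length_map, length_sin_taylor.
    unfold sin_approx; simpl sum_f_R0. fold (sin_approx a n). unfold sin_term, sin_coeff.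
    cbn [map peval]. rewrite (Q2R_make (alt_sign (S n))), Q2R_0, IZR_alt_sign, IZR_fact_pos.
    replace (2 * S n + 1)%nat with (S (2 * n + 2)) by lia. simpl pow. field.
    apply not_0_INR, fact_neq_0.
Qed.

Lemma peval_cos_taylor n a : peval (map Q2R (cos_taylor n)) a = cos_approx a n.
Proof.
  induction n as [|n IH].
  - unfold cos_approx, cos_term; simpl. unfold cos_coeff; rewrite Q2R_make. simpl. field.
  - simpl cos_taylor. rewrite map_app, peval_app, IH, length_map, length_cos_taylor.
    unfold cos_approx; simpl sum_f_R0. fold (cos_approx a n). unfold cos_term, cos_coeff.
    cbn [map peval]. rewrite (Q2R_make (alt_sign (S n))), Q2R_0, IZR_alt_sign, IZR_fact_pos.
    replace (2 * S n)%nat with (S (2 * n + 1)) by lia. simpl pow. field.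
    apply not_0_INR, fact_neq_0.
Qed.

Lemma peval_pad_zeros l t : peval (map Q2R (l ++ [0%Q; 0%Q])) t = peval (map Q2R l) t.
Proof. rewrite map_app, peval_app; cbn [map peval]. rewrite Q2R_0; ring. Qed.

(* [sin_bound] and [cos_bound] bracket sine and cosine between consecutive
   partial sums; the shorter one is padded to equal length. *)
Definition tm_sin (m : nat) :=
  tm_of_bounds (sin_taylor (2 * m + 1) ++ [0%Q; 0%Q]) (sin_taylor (2 * (m + 1))).
Definition tm_cos (m : nat) :=
  tm_of_bounds (cos_taylor (2 * m + 1) ++ [0%Q; 0%Q]) (cos_taylor (2 * (m + 1))).

Lemma tm_encloses_sin m t : 0 <= t <= PI -> tm_encloses (tm_sin m) t (sin t).
Proof.
  intros Ht. apply tm_encloses_between.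
  - rewrite length_app, !length_sin_taylor; simpl; lia.
  - rewrite peval_pad_zeros, !peval_sin_taylor. apply sin_bound; lra.
Qed.

Lemma tm_encloses_cos m t : - PI / 2 <= t <= PI / 2 -> tm_encloses (tm_cos m) t (cos t).
Proof.
  intros Ht. apply tm_encloses_between.
  - rewrite length_app, !length_cos_taylor; simpl; lia.
  - rewrite peval_pad_zeros, !peval_cos_taylor. apply cos_bound; lra.
Qed.

Fixpoint Qpeval (l : list Q) (x : Q) : Q :=
  match l with [] => 0%Q | c :: l' => (c + x * Qpeval l' x)%Q end.

Lemma Q2R_Qpeval l x : Q2R (Qpeval l x) = peval (map Q2R l) (Q2R x).
Proof. induction l; simpl; [apply Q2R_0 | rewrite Q2R_plus, Q2R_mult, IHl; auto]. Qed.

Definition itv_sin (m : nat) (x : Q) : itv :=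
  (round_down (Qpeval (sin_taylor (2 * m + 1)) x), round_up (Qpeval (sin_taylor (2 * (m + 1))) x)).
Definition itv_cos (m : nat) (x : Q) : itv :=
  (round_down (Qpeval (cos_taylor (2 * m + 1)) x), round_up (Qpeval (cos_taylor (2 * (m + 1))) x)).

Lemma itv_sin_correct m x : 0 <= Q2R x <= PI -> in_itv (sin (Q2R x)) (itv_sin m x).
Proof.
  intros H; unfold in_itv, itv_sin; cbn [fst snd].
  pose proof (round_down_le (Qpeval (sin_taylor (2 * m + 1)) x)).
  pose proof (round_up_ge (Qpeval (sin_taylor (2 * (m + 1))) x)).
  rewrite !Q2R_Qpeval, !peval_sin_taylor in *.
  pose proof (sin_bound (Q2R x) m ltac:(lra) ltac:(lra)). lra.
Qed.

Lemma itv_cos_correct m x : - PI / 2 <= Q2R x <= PI / 2 -> in_itv (cos (Q2R x)) (itv_cos m x).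
Proof.
  intros H; unfold in_itv, itv_cos; cbn [fst snd].
  pose proof (round_down_le (Qpeval (cos_taylor (2 * m + 1)) x)).
  pose proof (round_up_ge (Qpeval (cos_taylor (2 * (m + 1))) x)).
  rewrite !Q2R_Qpeval, !peval_cos_taylor in *.
  pose proof (cos_bound (Q2R x) m ltac:(lra) ltac:(lra)). lra.
Qed.

Inductive texpr :=
  | TX | TSin | TCos | TConst (q : Q)
  | TAdd (a b : texpr) | TSub (a b : texpr) | TMul (a b : texpr) | TPow (a : texpr) (n : nat).

Fixpoint texpr_val (x s c : R) (e : texpr) : R :=
  match e with
  | TX => x | TSin => s | TCos => c | TConst q => Q2R q
  | TAdd a b => texpr_val x s c a + texpr_val x s c b
  | TSub a b => texpr_val x s c a - texpr_val x s c b
  | TMul a b => texpr_val x s c a * texpr_val x s c b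
  | TPow a n => texpr_val x s c a ^ n
  end.

Definition texpr_fun (e : texpr) (x : R) : R := texpr_val x (sin x) (cos x) e.

Fixpoint tm_pow (d : nat) (h : Q) (P : list itv) (n : nat) : list itv :=
  match n with O => [(1, 1)%Q] | S k => tm_truncate d h (tm_mul P (tm_pow d h P k)) end.

Fixpoint tm_of_texpr (d : nat) (h : Q) (px ps pc : list itv) (e : texpr) : list itv :=
  match e with
  | TX => px | TSin => ps | TCos => pc | TConst q => [(q, q)]
  | TAdd a b => tm_add (tm_of_texpr d h px ps pc a) (tm_of_texpr d h px ps pc b)
  | TSub a b => tm_add (tm_of_texpr d h px ps pc a) (tm_opp (tm_of_texpr d h px ps pc b))
  | TMul a b => tm_truncate d h (tm_mul (tm_of_texpr d h px ps pc a) (tm_of_texpr d h px ps pc b))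
  | TPow a n => tm_pow d h (tm_of_texpr d h px ps pc a) n
  end.

Lemma tm_of_texpr_correct d h px ps pc t x s c e : 0 <= t <= Q2R h ->
  tm_encloses px t x -> tm_encloses ps t s -> tm_encloses pc t c ->
  tm_encloses (tm_of_texpr d h px ps pc e) t (texpr_val x s c e).
Proof.
  intros Ht Hx Hs Hc. induction e; simpl; auto.
  - apply tm_encloses_const.
  - apply tm_encloses_add; auto.
  - apply tm_encloses_add; auto. apply tm_encloses_opp; auto.
  - apply tm_encloses_truncate; auto. apply tm_encloses_mul; auto.
  - induction n; simpl.
    + rewrite <- Q2R_1. apply tm_encloses_const.
    + apply tm_encloses_truncate; auto. apply tm_encloses_mul; auto.
Qed.

(* Near a rational point [x0], [x0 + t] is modelled through the addition
   formulas, with [sin x0] and [cos x0] enclosed by rational intervals. *)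
Definition tm_x_at (x0 : Q) : list itv := [(x0, x0); (1, 1)%Q].
Definition tm_sin_at (d m : nat) (h x0 : Q) : list itv :=
  tm_truncate d h (tm_add (tm_scale (itv_sin m x0) (tm_cos m)) (tm_scale (itv_cos m x0) (tm_sin m))).
Definition tm_cos_at (d m : nat) (h x0 : Q) : list itv :=
  tm_truncate d h (tm_add (tm_scale (itv_cos m x0) (tm_cos m)) (tm_opp (tm_scale (itv_sin m x0) (tm_sin m)))).
Definition tm_texpr_at (e : texpr) (d m : nat) (h x0 : Q) : list itv :=
  tm_of_texpr d h (tm_x_at x0) (tm_sin_at d m h x0) (tm_cos_at d m h x0) e.

Lemma tm_texpr_at_correct e d m h x0 t :
  0 <= Q2R x0 <= PI / 2 -> Q2R h <= 3 / 2 -> 0 <= t <= Q2R h ->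
  tm_encloses (tm_texpr_at e d m h x0) t (texpr_fun e (Q2R x0 + t)).
Proof.
  intros Hx0 Hh Ht. pose proof PI2_3_2.
  assert (Es : tm_encloses (tm_sin m) t (sin t)) by (apply tm_encloses_sin; lra).
  assert (Ec : tm_encloses (tm_cos m) t (cos t)) by (apply tm_encloses_cos; lra).
  assert (Is : in_itv (sin (Q2R x0)) (itv_sin m x0)) by (apply itv_sin_correct; lra).
  assert (Ic : in_itv (cos (Q2R x0)) (itv_cos m x0)) by (apply itv_cos_correct; lra).
  apply tm_of_texpr_correct; auto.
  - exists [Q2R x0; 1]. split; [| simpl; ring].
    repeat constructor; unfold in_itv; simpl; rewrite ?Q2R_1; lra.
  - unfold tm_sin_at; apply tm_encloses_truncate; auto. rewrite sin_plus.
    apply tm_encloses_add; apply tm_encloses_scale; auto.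
  - unfold tm_cos_at; apply tm_encloses_truncate; auto. rewrite cos_plus.
    apply tm_encloses_add; [apply tm_encloses_scale; auto |].
    apply tm_encloses_opp, tm_encloses_scale; auto.
Qed.

Definition neg_part (b : Q) : Q := qmax 0 (- b).

Lemma Q2R_neg_part b : Q2R (neg_part b) = Rmax 0 (- Q2R b).
Proof. unfold neg_part; rewrite Q2R_qmax, Q2R_opp, Q2R_0; auto. Qed.

Lemma neg_part_nonneg B : List.Forall (fun a => 0 <= a) (map Q2R (map neg_part B)).
Proof. induction B; simpl; constructor; auto. rewrite Q2R_neg_part; apply Rmax_l. Qed.

Lemma peval_add_neg_part B t : 0 <= t -> 0 <= peval (map Q2R B) t + peval (map Q2R (map neg_part B)) t.
Proof.
  intros Ht; induction B as [|b B IH]; simpl; [lra |].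
  rewrite Q2R_neg_part.
  assert (0 <= Q2R b + Rmax 0 (- Q2R b)).
  { destruct (Rle_dec 0 (- Q2R b)); [rewrite Rmax_right | rewrite Rmax_left]; lra. }
  assert (0 <= t * (peval (map Q2R B) t + peval (map Q2R (map neg_part B)) t)) by (apply Rmult_le_pos; lra).
  nra.
Qed.

(* On [[0, h]] the tail [B] is at least minus its negative part, which is
   monotone and hence at most its value at [h]. *)
Lemma peval_pos_of_head_dominates b0 B h t : 0 <= t <= Q2R h ->
  0 < Q2R b0 - Q2R h * Q2R (Qpeval (map neg_part B) h) -> 0 < peval (map Q2R (b0 :: B)) t.
Proof.
  intros Ht Hb. rewrite Q2R_Qpeval in Hb. cbn [map peval].
  pose proof (peval_add_neg_part B t (proj1 Ht)).
  set (N := map Q2R (map neg_part B)) in *.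
  pose proof (peval_le_mono N t (Q2R h) Ht (neg_part_nonneg B)).
  pose proof (peval_nonneg N t (proj1 Ht) (neg_part_nonneg B)).
  assert (t * peval N t <= Q2R h * peval N (Q2R h)) by (apply Rmult_le_compat; lra).
  assert (0 <= t * (peval (map Q2R B) t + peval N t)) by (apply Rmult_le_pos; lra).
  nra.
Qed.

(* The lower coefficient polynomial has nonnegative coefficients below degree
   [k], and the rest, divided by [t^k], is positive on [[0, h]]. *)
Definition tm_pos_check (k : nat) (h : Q) (p : list itv) : bool :=
  let A := map fst p in
  forallb (fun a => Qle_bool 0 a) (firstn k A) &&
  match skipn k A with
  | [] => false
  | b0 :: B => negb (Qle_bool (b0 - h * Qpeval (map neg_part B) h) 0)
  end.

Lemma tm_pos_check_correct k h p t v : tm_pos_check k h p = true -> tm_encloses p t v ->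
  0 <= t <= Q2R h -> (0 < t \/ k = 0%nat) -> 0 < v.
Proof.
  unfold tm_pos_check. intros Hb He Ht Htk. apply andb_prop in Hb as [Hhead Htail].
  pose proof (tm_lower_le p t v (proj1 Ht) He) as Hlo.
  set (A := map fst p) in *.
  replace (map (fun i => Q2R (fst i)) p) with (map Q2R A) in Hlo by (unfold A; rewrite map_map; auto).
  rewrite <- (firstn_skipn k A), map_app, peval_app in Hlo.
  destruct (skipn k A) as [|b0 B] eqn:Eskip; [discriminate |].
  assert (0 <= peval (map Q2R (firstn k A)) t).
  { apply peval_nonneg; [lra |]. apply Forall_forall. intros a Ha.
    apply in_map_iff in Ha as [q [<- Hq]].
    apply (proj1 (forallb_forall _ _) Hhead), Qle_bool_iff, Qle_Rle in Hq. rewrite Q2R_0 in Hq; auto. }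
  assert (length (map Q2R (firstn k A)) = k) as Hlen.
  { rewrite length_map, length_firstn.
    destruct (Nat.le_gt_cases k (length A)); [lia |].
    rewrite skipn_all2 in Eskip by lia. discriminate. }
  rewrite Hlen in Hlo.
  assert (0 < peval (map Q2R (b0 :: B)) t).
  { apply (peval_pos_of_head_dominates _ _ h); auto.
    apply negb_true_iff, Qle_bool_false_Rlt in Htail.
    unfold Qminus in Htail. rewrite Q2R_plus, Q2R_opp, Q2R_mult, Q2R_0 in Htail. lra. }
  assert (0 < t ^ k) by (destruct Htk as [Htp | ->]; [apply pow_lt; auto | simpl; lra]).
  nra.
Qed.

Definition texpr_pos_check (e : texpr) (d m : nat) (h x0 : Q) (k : nat) : bool :=
  tm_pos_check k h (tm_texpr_at e d m h x0).

Lemma texpr_pos_check_correct e d m h x0 k t : texpr_pos_check e d m h x0 k = true ->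
  0 <= Q2R x0 <= PI / 2 -> Q2R h <= 3 / 2 -> 0 <= t <= Q2R h -> (0 < t \/ k = 0%nat) ->
  0 < texpr_fun e (Q2R x0 + t).
Proof.
  intros Hc Hx0 Hh Ht Htk.
  eapply tm_pos_check_correct; [exact Hc | apply tm_texpr_at_correct | |]; eauto.
Qed.

(* Checks [e > 0] on [(p, q_1]], [(q_1, q_2]], ...; only the first piece may use
   a vanishing order [k > 0], since its left end is excluded. *)
Fixpoint texpr_pos_chain (e : texpr) (d m : nat) (B : Q) (k : nat) (p : Q) (rest : list Q) : bool :=
  match rest with
  | [] => true
  | q :: rest' =>
      Qle_bool 0 p && Qle_bool p B && negb (Qle_bool q p) && Qle_bool (q - p) (3 # 2)
      && texpr_pos_check e d m (q - p) p k && texpr_pos_chain e d m B 0 q rest'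
  end.

Lemma last_cons_default {A} (a d : A) l : last (a :: l) d = last l a.
Proof.
  revert a d; induction l as [|b l IH]; intros a d; [reflexivity |].
  change (last (a :: b :: l) d) with (last (b :: l) d). rewrite !IH. reflexivity.
Qed.

Lemma texpr_pos_chain_correct e d m B k p rest : texpr_pos_chain e d m B k p rest = true ->
  Q2R B <= PI / 2 -> forall x, Q2R p < x <= Q2R (last rest p) -> 0 < texpr_fun e x.
Proof.
  revert k p; induction rest as [|q rest IH]; intros k p Hc HB x Hx; [simpl in Hx; lra |].
  simpl in Hc.
  apply andb_prop in Hc as [Hc Hrest]. apply andb_prop in Hc as [Hc Hcheck].
  apply andb_prop in Hc as [Hc Hwidth]. apply andb_prop in Hc as [Hc Hqp].
  apply andb_prop in Hc as [H0p HpB].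
  apply Qle_bool_iff, Qle_Rle in H0p, HpB, Hwidth. rewrite Q2R_0 in H0p.
  apply negb_true_iff, Qle_bool_false_Rlt in Hqp.
  unfold Qminus in Hwidth; rewrite Q2R_plus, Q2R_opp in Hwidth.
  replace (Q2R (3 # 2)) with (3 / 2) in Hwidth by (unfold Q2R; simpl; field).
  destruct (Rle_dec x (Q2R q)) as [Hxq | Hxq].
  - replace x with (Q2R p + (x - Q2R p)) by ring.
    eapply texpr_pos_check_correct; [exact Hcheck | lra | | | left; lra];
      unfold Qminus; rewrite Q2R_plus, Q2R_opp; lra.
  - apply (IH 0%nat q); auto. rewrite last_cons_default in Hx. lra.
Qed.

Definition texpr_upper (e : texpr) (d m : nat) (h x0 t : Q) : Q :=
  Qpeval (map snd (tm_texpr_at e d m h x0)) t.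

Lemma texpr_upper_correct e d m h x0 t :
  0 <= Q2R x0 <= PI / 2 -> Q2R h <= 3 / 2 -> 0 <= Q2R t <= Q2R h ->
  texpr_fun e (Q2R x0 + Q2R t) <= Q2R (texpr_upper e d m h x0 t).
Proof.
  intros Hx0 Hh Ht. unfold texpr_upper. rewrite Q2R_Qpeval, map_map.
  apply tm_upper_ge; [lra | apply tm_texpr_at_correct; auto].
Qed.

(** * Numerical inequalities on [(0, PI/2)] *)

Ltac Q2R_lit := unfold Q2R; simpl; field.

Definition PI2_below : Q := 15707 # 10000.
Definition PI2_above : Q := 15709 # 10000.

Lemma PI2_gt : Q2R PI2_below < PI / 2.
Proof.
  pose proof PI2_3_2. pose proof PI_RGT_0.
  assert (Hc : texpr_pos_chain TCos 10 3 (3 # 2) 0 (3 # 2) [PI2_below] = true) by (vm_compute; reflexivity).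
  assert (Q2R (3 # 2) = 3 / 2) by Q2R_lit. assert (Q2R PI2_below = 15707 / 10000) by Q2R_lit.
  assert (Hcos : 0 < cos (Q2R PI2_below)).
  { apply (texpr_pos_chain_correct _ _ _ _ _ _ _ Hc); simpl; lra. }
  destruct (Rlt_le_dec (Q2R PI2_below) (PI / 2)) as [| Hle]; auto.
  pose proof (cos_le_0 (Q2R PI2_below) Hle ltac:(lra)). lra.
Qed.

Lemma PI2_lt : PI / 2 < Q2R PI2_above.
Proof.
  pose proof PI2_gt. pose proof PI2_3_2.
  assert (Q2R PI2_below = 15707 / 10000) by Q2R_lit.
  assert (Q2R PI2_above = 15709 / 10000) by Q2R_lit.
  assert (Q2R (2 # 10000) = 2 / 10000) by Q2R_lit.
  pose proof (texpr_upper_correct TCos 10 3 (2 # 10000) PI2_below (2 # 10000)) as Hu.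
  specialize (Hu ltac:(lra) ltac:(lra) ltac:(lra)).
  assert (Hv : (texpr_upper TCos 10 3 (2 # 10000) PI2_below (2 # 10000) < 0)%Q) by (vm_compute; reflexivity).
  apply Qlt_Rlt in Hv. rewrite Q2R_0 in Hv. unfold texpr_fun in Hu; simpl in Hu.
  destruct (Rlt_le_dec (PI / 2) (Q2R PI2_above)) as [| Hle]; auto.
  pose proof (cos_ge_0 (Q2R PI2_below + Q2R (2 # 10000)) ltac:(lra) ltac:(lra)). lra.
Qed.

Lemma texpr_pos_chain_fun e (f : R -> R) d m k a pts :
  texpr_pos_chain e d m PI2_below k a pts = true -> (forall x, texpr_fun e x = f x) ->
  forall x, Q2R a < x <= Q2R (last pts a) -> 0 < f x.
Proof.
  intros Hc Hf x Hx. rewrite <- Hf.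
  apply (texpr_pos_chain_correct _ _ _ _ _ _ _ Hc); auto. pose proof PI2_gt; lra.
Qed.

Lemma texpr_pos_quarter e (f : R -> R) k :
  texpr_pos_chain e 20 4 PI2_below k 0 [3 # 2] = true ->
  texpr_pos_chain e 6 3 PI2_below 0 (3 # 2) [PI2_above] = true ->
  (forall x, texpr_fun e x = f x) -> forall x, 0 < x < PI / 2 -> 0 < f x.
Proof.
  intros H1 H2 Hf x Hx. pose proof PI2_lt.
  assert (Q2R (3 # 2) = 3 / 2) by Q2R_lit.
  destruct (Rle_dec x (3 / 2)).
  - apply (texpr_pos_chain_fun _ _ _ _ _ _ _ H1 Hf); simpl; rewrite Q2R_0; lra.
  - apply (texpr_pos_chain_fun _ _ _ _ _ _ _ H2 Hf); simpl; lra.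
Qed.

(* [Dsc x = - x^2 (sin x / x)'], and [Psi_num] is the numerator of the
   derivative computed in [Psi_deriv]. *)
Definition Dsc x := sin x - x * cos x.
Definition Esc x := x - sin x * cos x.
Definition Psi_num x := Dsc x * Esc x - 5 * x * (cos x * Esc x) + 10 * sin x * (cos x * Dsc x).

Definition texpr_D := TSub TSin (TMul TX TCos).
Definition texpr_E := TSub TX (TMul TSin TCos).
Definition texpr_Psi_num :=
  TAdd (TSub (TMul texpr_D texpr_E) (TMul (TMul (TConst 5) TX) (TMul TCos texpr_E)))
       (TMul (TMul (TConst 10) TSin) (TMul TCos texpr_D)).
Definition texpr_E_2cos_D := TSub texpr_E (TMul (TConst 2) (TMul TCos texpr_D)).
Definition texpr_2cos_D_E :=
  TSub (TMul (TConst 2) (TMul TCos texpr_D))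
       (TMul (TAdd (TConst 1) (TMul (TConst (35 # 39)) (TSub TCos (TConst 1)))) texpr_E).
Definition texpr_cos_D5_E5 :=
  TSub (TMul (TConst 32) (TMul TCos (TPow texpr_D 5)))
       (TMul (TPow texpr_E 5) (TSub (TConst 1) (TMul (TConst (1 # 5)) (TPow TX 4)))).
Definition texpr_cos_lin (g G : Q) :=
  TMul (TConst G) (TAdd (TConst 1) (TMul (TConst (6 # 59)) (TSub (TMul TCos (TConst (/ g))) (TConst 1)))).
Definition texpr_E_D_cos (g G : Q) := TSub texpr_E (TMul (TMul (TConst 2) texpr_D) (texpr_cos_lin g G)).
Definition texpr_mid (w g A G : Q) :=
  TSub (TMul TX TCos)
       (TMul (TSub (TMul (TMul (TConst 3) (TConst A))
                         (TAdd TX (TMul (TConst (35 # 39)) (TSub (TMul TSin (TConst (/ w))) TX))))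
                   (TMul (TConst 2) TX))
             (texpr_cos_lin g G)).

Ltac texpr_fun_eq :=
  intros; unfold texpr_fun;
  cbn [texpr_val texpr_D texpr_E texpr_Psi_num texpr_E_2cos_D texpr_2cos_D_E texpr_cos_D5_E5
       texpr_cos_lin texpr_E_D_cos texpr_mid];
  unfold Psi_num, Dsc, Esc; unfold Q2R; simpl; field.

Lemma Dsc_pos x : 0 < x < PI / 2 -> 0 < Dsc x.
Proof. apply (texpr_pos_quarter texpr_D Dsc 3); [vm_compute; reflexivity .. | texpr_fun_eq]. Qed.

Lemma Esc_pos x : 0 < x < PI / 2 -> 0 < Esc x.
Proof. apply (texpr_pos_quarter texpr_E Esc 3); [vm_compute; reflexivity .. | texpr_fun_eq]. Qed.

Lemma Psi_num_pos x : 0 < x < PI / 2 -> 0 < Psi_num x.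
Proof. apply (texpr_pos_quarter texpr_Psi_num Psi_num 8); [vm_compute; reflexivity .. | texpr_fun_eq]. Qed.

Lemma two_cos_Dsc_lt_Esc x : 0 < x < PI / 2 -> 2 * cos x * Dsc x < Esc x.
Proof.
  intros Hx. cut (0 < Esc x - 2 * (cos x * Dsc x)); [lra |]. revert x Hx.
  apply (texpr_pos_quarter texpr_E_2cos_D (fun x => Esc x - 2 * (cos x * Dsc x)) 5); [vm_compute; reflexivity .. | texpr_fun_eq].
Qed.

Lemma Esc_bernoulli_lt_two_cos_Dsc x : 0 < x <= 21 / 20 ->
  (1 + 35 / 39 * (cos x - 1)) * Esc x < 2 * cos x * Dsc x.
Proof.
  intros Hx. set (f := fun x => 2 * (cos x * Dsc x) - (1 + 35 / 39 * (cos x - 1)) * Esc x).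
  cut (0 < f x); [unfold f; lra |].
  assert (Hf : forall x, texpr_fun texpr_2cos_D_E x = f x) by (unfold f; texpr_fun_eq).
  destruct (Rle_dec x (3 / 4)).
  - apply (texpr_pos_chain_fun texpr_2cos_D_E f 20 4 5 0 [3 # 4]);
      [vm_compute; reflexivity | exact Hf | simpl; unfold Q2R; simpl; lra].
  - apply (texpr_pos_chain_fun texpr_2cos_D_E f 10 4 0 (3 # 4) [17 # 20; 19 # 20; 21 # 20]);
      [vm_compute; reflexivity | exact Hf | simpl; unfold Q2R; simpl; lra].
Qed.

Lemma Esc5_lt_32_cos_Dsc5 x : 0 < x <= 1 / 2 -> Esc x ^ 5 * (1 - 1 / 5 * x ^ 4) < 32 * cos x * Dsc x ^ 5.
Proof.
  intros Hx. set (f := fun x => 32 * (cos x * Dsc x ^ 5) - Esc x ^ 5 * (1 - 1 / 5 * x ^ 4)).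
  cut (0 < f x); [unfold f; lra |].
  apply (texpr_pos_chain_fun texpr_cos_D5_E5 f 30 5 19 0 [1 # 2]);
    [vm_compute; reflexivity | unfold f; texpr_fun_eq | simpl; unfold Q2R; simpl; lra].
Qed.

Lemma cos_lt_near_PI2 x : 145 / 100 < x < PI / 2 -> cos x < 603 / 5000.
Proof.
  intros Hx. pose proof PI2_lt.
  cut (0 < 603 / 5000 - cos x); [lra |].
  apply (texpr_pos_chain_fun (TSub (TConst (603 # 5000)) TCos) (fun x => 603 / 5000 - cos x)
           10 3 0 (145 # 100) [3 # 2; PI2_above]);
    [vm_compute; reflexivity | texpr_fun_eq | simpl; unfold Q2R in *; simpl in *; lra].
Qed.

Lemma two_Dsc_cos_lin_lt_Esc x : 145 / 100 < x < PI / 2 ->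
  2 * Dsc x * (1613 / 2000 * (1 + 6 / 59 * (cos x * / (603 / 5000) - 1))) < Esc x.
Proof.
  intros Hx. pose proof PI2_lt.
  set (f := fun x => Esc x - 2 * Dsc x * (1613 / 2000 * (1 + 6 / 59 * (cos x * / (603 / 5000) - 1)))).
  cut (0 < f x); [unfold f; lra |].
  apply (texpr_pos_chain_fun (texpr_E_D_cos (603 # 5000) (1613 # 2000)) f 10 3 0 (145 # 100) [PI2_above]);
    [vm_compute; reflexivity | unfold f; texpr_fun_eq | simpl; unfold Q2R in *; simpl in *; lra].
Qed.

(* On [(a, b]] these bound [sin x / x <= w] and [cos x <= g]; [A] and [G] are
   rational upper bounds for [w^(35/39)] and [g^(6/59)]. *)
Definition mid_fun (w g A G x : R) :=
  x * cos x - (3 * A * (x + 35 / 39 * (sin x * / w - x)) - 2 * x) * (G * (1 + 6 / 59 * (cos x * / g - 1))).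

Definition mid_bounds (a b w g A G : Q) := forall x, Q2R a < x <= Q2R b ->
  0 < mid_fun (Q2R w) (Q2R g) (Q2R A) (Q2R G) x /\ sin x < Q2R w * x /\ cos x < Q2R g.

Ltac chain_side :=
  lazymatch goal with
  | |- texpr_pos_chain _ _ _ _ _ _ _ = true => vm_compute; reflexivity
  | |- forall x, texpr_fun _ x = _ => unfold mid_fun; texpr_fun_eq
  | |- _ => simpl; unfold Q2R; simpl; lra
  end.

Ltac mid_bounds_tac a b w g A G :=
  let x := fresh "x" in let Hx := fresh "Hx" in
  intros x Hx; split; [| split; apply Rlt_0_minus];
  [ apply (texpr_pos_chain_fun (texpr_mid w g A G) (mid_fun (Q2R w) (Q2R g) (Q2R A) (Q2R G)) 10 3 0 a [b])
  | apply (texpr_pos_chain_fun (TSub (TMul (TConst w) TX) TSin) (fun z => Q2R w * z - sin z) 10 3 0 a [b])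
  | apply (texpr_pos_chain_fun (TSub (TConst g) TCos) (fun z => Q2R g - cos z) 10 3 0 a [b]) ];
  chain_side.

Lemma mid_bounds_105_115 : mid_bounds (105 # 100) (115 # 100) (207 # 250) (499 # 1000) (4221 # 5000) (4659 # 5000).
Proof. mid_bounds_tac (105 # 100) (115 # 100) (207 # 250) (499 # 1000) (4221 # 5000) (4659 # 5000). Qed.

Lemma mid_bounds_115_125 : mid_bounds (115 # 100) (125 # 100) (159 # 200) (41 # 100) (407 # 500) (4567 # 5000).
Proof. mid_bounds_tac (115 # 100) (125 # 100) (159 # 200) (41 # 100) (407 # 500) (4567 # 5000). Qed.

Lemma mid_bounds_125_135 : mid_bounds (125 # 100) (135 # 100) (761 # 1000) (317 # 1000) (7827 # 10000) (4449 # 5000).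
Proof. mid_bounds_tac (125 # 100) (135 # 100) (761 # 1000) (317 # 1000) (7827 # 10000) (4449 # 5000). Qed.

Lemma mid_bounds_135_145 : mid_bounds (135 # 100) (145 # 100) (181 # 250) (221 # 1000) (1871 # 2500) (8577 # 10000).
Proof. mid_bounds_tac (135 # 100) (145 # 100) (181 # 250) (221 # 1000) (1871 # 2500) (8577 # 10000). Qed.

Lemma ln_le_sub_1 z : 0 < z -> ln z <= z - 1.
Proof. intros Hz. pose proof (exp_ineq1_le (ln z)). rewrite exp_ln in H; lra. Qed.

Lemma ln_ge_1_sub_inv z : 0 < z -> 1 - / z <= ln z.
Proof. intros Hz. pose proof (ln_le_sub_1 (/ z) (Rinv_0_lt_compat _ Hz)). rewrite ln_Rinv in H; lra. Qed.

Lemma ln_le_ln a b : 0 < a -> a <= b -> ln a <= ln b.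
Proof. intros Ha [H | H]; [left; apply ln_increasing; auto | subst; lra]. Qed.

Lemma ln_lt_0 a : 0 < a < 1 -> ln a < 0.
Proof. intros H. rewrite <- ln_1. apply ln_increasing; lra. Qed.

Lemma ln_div a b : 0 < a -> 0 < b -> ln (a / b) = ln a - ln b.
Proof.
  intros. unfold Rdiv. rewrite ln_mult, ln_Rinv by (auto; apply Rinv_0_lt_compat; auto). ring.
Qed.

Lemma exp_le_exp a b : a <= b -> exp a <= exp b.
Proof. intros [H | H]; [left; apply exp_increasing; auto | subst; lra]. Qed.

Lemma Rpower_pos a r : 0 < Rpower a r.
Proof. unfold Rpower; apply exp_pos. Qed.

Lemma Rpower_base_1 r : Rpower 1 r = 1.
Proof. unfold Rpower; rewrite ln_1, Rmult_0_r; apply exp_0. Qed.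

Lemma Rpower_le_lt_1 a r1 r2 : 0 < a < 1 -> r1 <= r2 -> Rpower a r2 <= Rpower a r1.
Proof. intros Ha Hr. unfold Rpower. apply exp_le_exp. pose proof (ln_lt_0 a Ha). nra. Qed.

Lemma Rpower_lt_lt_1 a r1 r2 : 0 < a < 1 -> r1 < r2 -> Rpower a r2 < Rpower a r1.
Proof. intros Ha Hr. unfold Rpower. apply exp_increasing. pose proof (ln_lt_0 a Ha). nra. Qed.

Lemma Rpower_lt_1 a r : 0 < a < 1 -> 0 < r -> Rpower a r < 1.
Proof. intros. pose proof (Rpower_lt_lt_1 a 0 r H H0). rewrite Rpower_O in H1 by lra. lra. Qed.

Lemma Rpower_ge_base a r : 0 < a < 1 -> r <= 1 -> a <= Rpower a r.
Proof. intros. rewrite <- (Rpower_1 a) at 1 by lra. apply Rpower_le_lt_1; lra. Qed.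

Lemma pow_lt_pow_l a b m : 0 <= a < b -> (0 < m)%nat -> a ^ m < b ^ m.
Proof.
  intros Hab Hm. destruct m as [|m]; [lia |]. clear Hm. induction m as [|m IH]; [simpl; lra |].
  change (a ^ S (S m)) with (a * a ^ S m). change (b ^ S (S m)) with (b * b ^ S m).
  pose proof (pow_le a (S m) (proj1 Hab)). apply Rmult_le_0_lt_compat; lra.
Qed.

Lemma Rpower_rat_le w A n m : 0 < w -> 0 < A -> (0 < m)%nat -> w ^ n <= A ^ m ->
  Rpower w (INR n / INR m) <= A.
Proof.
  intros Hw HA Hm H. destruct (Rle_dec (Rpower w (INR n / INR m)) A) as [| Hn]; auto.
  assert (A ^ m < Rpower w (INR n / INR m) ^ m) by (apply pow_lt_pow_l; [lra | lia]).
  assert (Rpower w (INR n / INR m) ^ m = w ^ n); [| lra].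
  rewrite <- Rpower_pow, Rpower_mult by apply Rpower_pos.
  replace (INR n / INR m * INR m) with (INR n) by (field; apply not_0_INR; lia).
  apply Rpower_pow; auto.
Qed.

(* Bernoulli's inequality for exponents in (0, 1), by the mean value theorem
   around the tangency point [z = 1]. *)
Lemma Rpower_le_bernoulli r z : 0 < r < 1 -> 0 < z -> Rpower z r <= 1 + r * (z - 1).
Proof.
  intros Hr Hz.
  set (f := fun y => 1 + r * (y - 1) - Rpower y r).
  set (f' := fun y => r - r * Rpower y (r - 1)).
  assert (Hd : forall y, 0 < y -> derivable_pt_lim f y (f' y)).
  { intros y Hy. unfold f, f'.
    replace (r - r * Rpower y (r - 1)) with (0 + r * (1 - 0) - r * Rpower y (r - 1)) by ring.
    apply derivable_pt_lim_minus; [| apply derivable_pt_lim_power; auto].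
    apply derivable_pt_lim_plus; [apply derivable_pt_lim_const |].
    apply derivable_pt_lim_scal, derivable_pt_lim_minus; [apply derivable_pt_lim_id | apply derivable_pt_lim_const]. }
  assert (f 1 = 0) by (unfold f; rewrite Rpower_base_1; ring).
  enough (0 <= f z) by (unfold f in *; lra).
  destruct (Rtotal_order z 1) as [Hlt | [-> | Hgt]]; [| lra |].
  - destruct (MVT_cor2 f f' z 1 Hlt) as [c [Hc1 Hc2]]; [intros; apply Hd; lra |].
    assert (1 < Rpower c (r - 1)).
    { pose proof (Rpower_lt_lt_1 c (r - 1) 0 ltac:(lra) ltac:(lra)). rewrite Rpower_O in H0 by lra. lra. }
    assert (f' c < 0) by (unfold f'; nra). nra.
  - destruct (MVT_cor2 f f' 1 z Hgt) as [c [Hc1 Hc2]]; [intros; apply Hd; lra |].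
    assert (Rpower c (r - 1) < 1).
    { assert (0 < ln c) by (rewrite <- ln_1; apply ln_increasing; lra).
      unfold Rpower. apply Rlt_le_trans with (exp 0); [apply exp_increasing; nra | rewrite exp_0; lra]. }
    assert (0 < f' c) by (unfold f'; nra). nra.
Qed.

Lemma cos_le_taylor4 x : 0 <= x <= PI / 2 -> cos x <= 1 - x ^ 2 / 2 + x ^ 4 / 24.
Proof.
  intros H. pose proof PI_RGT_0. pose proof (cos_bound x 0 ltac:(lra) ltac:(lra)) as [_ H1].
  unfold cos_approx, cos_term in H1; simpl in H1. lra.
Qed.

Lemma cos_ge_taylor2 x : 0 <= x <= PI / 2 -> 1 - x ^ 2 / 2 <= cos x.
Proof.
  intros H. pose proof PI_RGT_0. pose proof (cos_bound x 0 ltac:(lra) ltac:(lra)) as [H1 _].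
  unfold cos_approx, cos_term in H1; simpl in H1. lra.
Qed.

Lemma sin_ge_taylor3 x : 0 <= x <= PI -> x - x ^ 3 / 6 <= sin x.
Proof.
  intros H. pose proof (sin_bound x 0 ltac:(lra) ltac:(lra)) as [H1 _].
  unfold sin_approx, sin_term in H1; simpl in H1. lra.
Qed.

Lemma sin_cos_bounds x : 0 < x < PI / 2 -> 0 < sin x /\ sin x < x /\ 0 < cos x /\ cos x < 1.
Proof.
  intros Hx. pose proof PI_RGT_0. pose proof PI2_lt. unfold PI2_above, Q2R in H0; simpl in H0.
  repeat split; [apply sin_gt_0 | apply sin_lt_x | apply cos_gt_0 |]; try lra.
  pose proof (cos_le_taylor4 x ltac:(lra)).
  assert (0 < x ^ 2 * (12 - x ^ 2)) by (apply Rmult_lt_0_compat; nra).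
  nra.
Qed.

Lemma sin2_add_cos2 x : sin x ^ 2 + cos x ^ 2 = 1.
Proof. pose proof (sin2_cos2 x). unfold Rsqr in H. nra. Qed.

(** * Sign from monotonicity and boundary behaviour *)

Lemma pos_of_deriv_pos_from_0 f f' x : 0 < x ->
  (forall c, 0 < c <= x -> derivable_pt_lim f c (f' c)) -> (forall c, 0 < c < x -> 0 < f' c) ->
  (forall d y, 0 < d -> 0 < y -> exists e, 0 < e < y /\ - d < f e) -> 0 < f x.
Proof.
  intros Hx Hd Hp Hl.
  assert (Hi : forall u v, 0 < u -> u < v -> v <= x -> f u < f v).
  { intros u v Hu Huv Hv. destruct (MVT_cor2 f f' u v Huv) as [c [E Hc]]; [intros; apply Hd; lra |].
    specialize (Hp c ltac:(lra)). nra. }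
  assert (f (x / 2) < f x) by (apply Hi; lra).
  destruct (Rle_dec 0 (f (x / 2))) as [| Hn]; [lra |].
  destruct (Hl (- f (x / 2)) (x / 2) ltac:(lra) ltac:(lra)) as [e [He1 He2]].
  assert (f e < f (x / 2)) by (apply Hi; lra). lra.
Qed.

Lemma neg_of_deriv_neg_from_0 f f' x : 0 < x ->
  (forall c, 0 < c <= x -> derivable_pt_lim f c (f' c)) -> (forall c, 0 < c < x -> f' c < 0) ->
  (forall d y, 0 < d -> 0 < y -> exists e, 0 < e < y /\ f e < d) -> f x < 0.
Proof.
  intros Hx Hd Hp Hl.
  assert (0 < opp_fct f x); [| unfold opp_fct in *; lra].
  apply (pos_of_deriv_pos_from_0 _ (opp_fct f')); auto.
  - intros c Hc. apply derivable_pt_lim_opp; auto.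
  - intros c Hc. unfold opp_fct. specialize (Hp c Hc). lra.
  - intros d y Hd0 Hy. destruct (Hl d y Hd0 Hy) as [e [He Hfe]]. exists e. unfold opp_fct. split; [auto | lra].
Qed.

Lemma neg_of_deriv_pos_to f f' x b : x < b ->
  (forall c, x <= c < b -> derivable_pt_lim f c (f' c)) -> (forall c, x < c < b -> 0 < f' c) ->
  (forall d z, 0 < d -> z < b -> exists y, z < y < b /\ f y < d) -> f x < 0.
Proof.
  intros Hx Hd Hp Hl.
  assert (Hi : forall u v, x <= u -> u < v -> v < b -> f u < f v).
  { intros u v Hu Huv Hv. destruct (MVT_cor2 f f' u v Huv) as [c [E Hc]]; [intros; apply Hd; lra |].
    specialize (Hp c ltac:(lra)). nra. }
  set (x' := (x + b) / 2). assert (f x < f x') by (apply Hi; unfold x'; lra).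
  destruct (Rle_dec (f x') 0) as [| Hn]; [lra |].
  destruct (Hl (f x') x' ltac:(lra) ltac:(unfold x'; lra)) as [y [Hy1 Hy2]].
  assert (f x' < f y) by (apply Hi; unfold x' in *; lra). lra.
Qed.

Lemma exists_small_sq eta y : 0 < eta -> 0 < y -> exists e, 0 < e < y /\ e < 1 /\ e ^ 2 < eta.
Proof.
  intros He Hy. set (m := Rmin y (Rmin eta 1)). exists (m / 2).
  pose proof (Rmin_l y (Rmin eta 1)). pose proof (Rmin_r y (Rmin eta 1)).
  pose proof (Rmin_l eta 1). pose proof (Rmin_r eta 1).
  assert (0 < m) by (apply Rmin_glb_lt; [lra | apply Rmin_glb_lt; lra]).
  fold m in H, H0. repeat split; try lra. nra.
Qed.

(** * The logarithmic gap [Phi] *)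

(* [Phi r x > 0] iff [M_r(1, cos x; 2/3) < sin x / x] for [r > 0]. *)
Definition Phi (r x : R) := r * ln (sin x / x) - ln ((2 + Rpower (cos x) r) / 3).
Definition Phi' (r x : R) :=
  r * (Rpower (cos x) r * Esc x - 2 * cos x * Dsc x) / (x * sin x * cos x * (2 + Rpower (cos x) r)).

Lemma Phi_deriv r x : 0 < x < PI / 2 -> derivable_pt_lim (Phi r) x (Phi' r x).
Proof.
  intros Hx. destruct (sin_cos_bounds x Hx) as [Hs [Hsx [Hc Hc1]]].
  apply is_derive_Reals. unfold Phi, Phi', Rpower.
  assert (0 < exp (r * ln (cos x))) by apply exp_pos.
  auto_derive; repeat split; try lra.
  - apply Rdiv_lt_0_compat; lra.
  - unfold Esc, Dsc. pose proof (sin2_add_cos2 x).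
    replace (x - sin x * cos x) with (x * (sin x ^ 2 + cos x ^ 2) - sin x * cos x) by (rewrite H0; ring).
    field. repeat split; lra.
Qed.

Lemma Phi_deriv_on r x : 0 < x < PI / 2 -> forall c, 0 < c <= x -> derivable_pt_lim (Phi r) c (Phi' r c).
Proof. intros Hx c Hc. apply Phi_deriv; lra. Qed.

Lemma Phi'_pos r x : 0 < r -> 0 < x < PI / 2 ->
  2 * cos x * Dsc x < Rpower (cos x) r * Esc x -> 0 < Phi' r x.
Proof.
  intros Hr Hx H. destruct (sin_cos_bounds x Hx) as [Hs [Hsx [Hc Hc1]]].
  pose proof (Rpower_pos (cos x) r).
  apply Rdiv_lt_0_compat; [nra | repeat apply Rmult_lt_0_compat; lra].
Qed.

Lemma Phi'_neg r x : 0 < r -> 0 < x < PI / 2 ->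
  Rpower (cos x) r * Esc x < 2 * cos x * Dsc x -> Phi' r x < 0.
Proof.
  intros Hr Hx H. destruct (sin_cos_bounds x Hx) as [Hs [Hsx [Hc Hc1]]].
  pose proof (Rpower_pos (cos x) r).
  apply Rdiv_neg_pos; [nra | repeat apply Rmult_lt_0_compat; lra].
Qed.

Lemma Phi_gt_near_0 a : 0 < a ->
  forall d y, 0 < d -> 0 < y -> exists e, 0 < e < y /\ - d < Phi a e.
Proof.
  intros Ha d y Hd Hy. pose proof PI2_3_2.
  destruct (exists_small_sq (Rmin (3 * d / a) 1) (Rmin y 1)) as [e [He1 [He2 He3]]].
  { apply Rmin_glb_lt; [apply Rdiv_lt_0_compat |]; lra. } { apply Rmin_glb_lt; lra. }
  pose proof (Rmin_l y 1). pose proof (Rmin_r y 1). pose proof (Rmin_l (3 * d / a) 1).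
  exists e; split; [lra |]. assert (He : 0 < e < PI / 2) by lra.
  destruct (sin_cos_bounds e He) as [Hs [Hsx [Hc Hc1]]].
  pose proof (sin_ge_taylor3 e ltac:(lra)).
  assert (Hln0 : ln ((2 + Rpower (cos e) a) / 3) <= 0).
  { rewrite <- ln_1. apply ln_le_ln; [pose proof (Rpower_pos (cos e) a); lra |].
    pose proof (Rpower_lt_1 (cos e) a ltac:(lra) Ha). lra. }
  assert (Hsp : 0 < sin e / e) by (apply Rdiv_lt_0_compat; lra).
  pose proof (ln_ge_1_sub_inv _ Hsp).
  assert (/ (sin e / e) <= 1 + e ^ 2 / 3).
  { rewrite Rinv_div. apply (Rmult_le_reg_r (sin e)); auto. unfold Rdiv. rewrite Rmult_assoc, Rinv_l by lra.
    assert (e ^ 3 = e * e ^ 2) by ring. assert (e ^ 2 < 1) by nra. nra. }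
  assert (a * (e ^ 2 / 3) < d).
  { apply (Rmult_lt_compat_l a) in He3; [| lra]. pose proof (Rmin_l (3 * d / a) 1).
    assert (a * (3 * d / a) = 3 * d) by (field; lra). nra. }
  unfold Phi. nra.
Qed.

Lemma Phi_lt_near_0 a : 0 < a ->
  forall d y, 0 < d -> 0 < y -> exists e, 0 < e < y /\ Phi a e < d.
Proof.
  intros Ha d y Hd Hy. pose proof PI2_3_2.
  destruct (exists_small_sq (d / a) (Rmin y 1)) as [e [He1 [He2 He3]]];
    [apply Rdiv_lt_0_compat; lra | apply Rmin_glb_lt; lra |].
  pose proof (Rmin_l y 1). pose proof (Rmin_r y 1).
  exists e; split; [lra |]. assert (He : 0 < e < PI / 2) by lra.
  destruct (sin_cos_bounds e He) as [Hs [Hsx [Hc Hc1]]].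
  assert (Hs1 : ln (sin e / e) < 0).
  { apply ln_lt_0. split; [apply Rdiv_lt_0_compat; lra |].
    apply (Rmult_lt_reg_r e); [lra |]. unfold Rdiv; rewrite Rmult_assoc, Rinv_l; lra. }
  set (ca := Rpower (cos e) a).
  pose proof (Rpower_pos (cos e) a). pose proof (Rpower_lt_1 (cos e) a ltac:(lra) Ha).
  pose proof (ln_ge_1_sub_inv ((2 + ca) / 3) ltac:(unfold ca; lra)).
  assert (/ ((2 + ca) / 3) - 1 <= 1 - ca).
  { replace (/ ((2 + ca) / 3) - 1) with ((1 - ca) / (2 + ca)) by (field; unfold ca; lra).
    apply (Rmult_le_reg_r (2 + ca)); [unfold ca; lra |].
    unfold Rdiv; rewrite Rmult_assoc, Rinv_l by (unfold ca; lra). unfold ca; nra. }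
  assert (1 + a * ln (cos e) <= ca) by (unfold ca, Rpower; apply exp_ineq1_le).
  pose proof (ln_ge_1_sub_inv (cos e) Hc). pose proof (cos_ge_taylor2 e ltac:(lra)).
  assert (/ cos e - 1 <= e ^ 2).
  { replace (/ cos e - 1) with ((1 - cos e) / cos e) by (field; lra).
    apply (Rmult_le_reg_r (cos e)); [lra |]. unfold Rdiv; rewrite Rmult_assoc, Rinv_l by lra.
    assert (e ^ 2 < 1) by nra. nra. }
  assert (a * e ^ 2 < d).
  { apply (Rmult_lt_compat_l a) in He3; [| lra].
    replace (a * (d / a)) with d in He3 by (field; lra). lra. }
  unfold Phi. fold ca. nra.
Qed.

(** * The lower bound [4/5] *)

(* [Psi > 0] says exactly [2 cos x Dsc x < cos x ^ (4/5) Esc x], i.e. [Phi' (4/5) > 0]. *)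
Definition Psi x := ln (Esc x) - ln (2 * Dsc x) - / 5 * ln (cos x).

Lemma Psi_deriv x : 0 < x < PI / 2 ->
  derivable_pt_lim Psi x (sin x * Psi_num x / (5 * cos x * Dsc x * Esc x)).
Proof.
  intros Hx. destruct (sin_cos_bounds x Hx) as [Hs [Hsx [Hc Hc1]]].
  pose proof (Dsc_pos x Hx). pose proof (Esc_pos x Hx).
  replace (sin x * Psi_num x / (5 * cos x * Dsc x * Esc x))
    with ((1 - cos x ^ 2 + sin x ^ 2) / Esc x - x * sin x / Dsc x + / 5 * (sin x / cos x)).
  2: { replace (1 - cos x ^ 2 + sin x ^ 2) with (2 * sin x ^ 2) by (pose proof (sin2_add_cos2 x); lra).
       unfold Psi_num. field. repeat split; lra. }
  apply is_derive_Reals. unfold Psi. unfold Esc, Dsc in *.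
  auto_derive; repeat split; try lra.
  field. repeat split; lra.
Qed.

Lemma Psi_gt_near_0 d y : 0 < d -> 0 < y -> exists e, 0 < e < y /\ - d < Psi e.
Proof.
  intros Hd Hy. pose proof PI2_3_2.
  destruct (exists_small_sq (2 * d / (1 + d)) (Rmin y 1)) as [e [He1 [He2 He3]]];
    [apply Rdiv_lt_0_compat; lra | apply Rmin_glb_lt; lra |].
  pose proof (Rmin_l y 1). pose proof (Rmin_r y 1).
  exists e; split; [lra |]. assert (He : 0 < e < PI / 2) by lra.
  destruct (sin_cos_bounds e He) as [Hs [Hsx [Hc Hc1]]].
  pose proof (two_cos_Dsc_lt_Esc e He). pose proof (Dsc_pos e He). pose proof (Esc_pos e He).
  assert (ln (2 * Dsc e) + ln (cos e) <= ln (Esc e)).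
  { rewrite <- ln_mult by lra. apply ln_le_ln; [apply Rmult_lt_0_compat |]; lra. }
  pose proof (ln_ge_1_sub_inv (cos e) Hc). pose proof (cos_ge_taylor2 e ltac:(lra)).
  assert (/ cos e < 1 + d).
  { assert (1 / (1 + d) < cos e).
    { assert (e ^ 2 / 2 < d / (1 + d)) by (unfold Rdiv in *; lra).
      assert (1 / (1 + d) = 1 - d / (1 + d)) by (field; lra). lra. }
    apply (Rmult_lt_reg_r (cos e)); auto. rewrite Rinv_l by lra.
    apply (Rmult_lt_reg_r (/ (1 + d))); [apply Rinv_0_lt_compat; lra |].
    replace ((1 + d) * cos e * / (1 + d)) with (cos e) by (field; lra). lra. }
  unfold Psi. lra.
Qed.

Lemma Psi_pos x : 0 < x < PI / 2 -> 0 < Psi x.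
Proof.
  intros Hx. apply (pos_of_deriv_pos_from_0 _ (fun c => sin c * Psi_num c / (5 * cos c * Dsc c * Esc c)));
    [lra | intros c Hc; apply Psi_deriv; lra | | apply Psi_gt_near_0].
  intros c Hc. assert (Hc' : 0 < c < PI / 2) by lra.
  destruct (sin_cos_bounds c Hc') as [? [? [? ?]]].
  pose proof (Psi_num_pos c Hc'). pose proof (Dsc_pos c Hc'). pose proof (Esc_pos c Hc').
  apply Rdiv_lt_0_compat; [apply Rmult_lt_0_compat | repeat apply Rmult_lt_0_compat]; lra.
Qed.

Lemma two_cos_Dsc_lt_cos45_Esc x : 0 < x < PI / 2 -> 2 * cos x * Dsc x < Rpower (cos x) (4 / 5) * Esc x.
Proof.
  intros Hx. destruct (sin_cos_bounds x Hx) as [Hs [Hsx [Hc Hc1]]].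
  pose proof (Dsc_pos x Hx). pose proof (Esc_pos x Hx). pose proof (Psi_pos x Hx). unfold Psi in H1.
  assert (2 * Dsc x * Rpower (cos x) (1 / 5) < Esc x).
  { rewrite <- (exp_ln (Esc x)), <- (exp_ln (2 * Dsc x)) by lra. unfold Rpower.
    rewrite <- exp_plus. apply exp_increasing. lra. }
  assert (Rpower (cos x) (4 / 5) * Rpower (cos x) (1 / 5) = cos x).
  { rewrite <- Rpower_plus. replace (4 / 5 + 1 / 5) with 1 by field. apply Rpower_1; lra. }
  pose proof (Rpower_pos (cos x) (4 / 5)). nra.
Qed.

Lemma Phi_pos_of_le_45 a x : 0 < a <= 4 / 5 -> 0 < x < PI / 2 -> 0 < Phi a x.
Proof.
  intros Ha Hx. apply (pos_of_deriv_pos_from_0 _ (Phi' a));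
    [lra | apply Phi_deriv_on; auto | | apply Phi_gt_near_0; lra].
  intros c Hc. assert (Hc' : 0 < c < PI / 2) by lra.
  destruct (sin_cos_bounds c Hc') as [? [? [? ?]]].
  apply Phi'_pos; [lra | auto |].
  pose proof (two_cos_Dsc_lt_cos45_Esc c Hc'). pose proof (Esc_pos c Hc').
  pose proof (Rpower_le_lt_1 (cos c) a (4 / 5) ltac:(lra) ltac:(lra)). nra.
Qed.

(** * The critical exponent [p] *)

Definition p_crit := (ln 3 - ln 2) / (ln PI - ln 2).

Lemma PI2_bounds : 15707 / 10000 < PI / 2 < 15709 / 10000.
Proof.
  pose proof PI2_gt. pose proof PI2_lt. unfold PI2_below, PI2_above, Q2R in *; simpl in *. lra.
Qed.

Lemma ln_PI_sub_ln_2_pos : 0 < ln PI - ln 2.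
Proof. pose proof PI2_3_2. assert (ln 2 < ln PI) by (apply ln_increasing; lra). lra. Qed.

Lemma p_crit_mul : p_crit * (ln PI - ln 2) = ln 3 - ln 2.
Proof. unfold p_crit. pose proof ln_PI_sub_ln_2_pos. field. lra. Qed.

(* Compare [(PI/2)^35] with [(3/2)^39] and [(3/2)^59] with [(PI/2)^53]. *)
Lemma p_crit_bounds : 35 / 39 < p_crit < 53 / 59.
Proof.
  pose proof PI2_bounds. pose proof ln_PI_sub_ln_2_pos.
  assert (Hl : ln PI - ln 2 = ln (PI / 2)) by (rewrite ln_div; lra).
  assert (Hl3 : ln 3 - ln 2 = ln (3 / 2)) by (rewrite ln_div; lra).
  pose proof p_crit_mul as Hr. rewrite Hl, Hl3 in Hr. rewrite Hl in H0.
  split.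
  - assert (35 * ln (PI / 2) < 39 * ln (3 / 2)); [| nra].
    replace 35 with (INR 35) by (simpl; lra). replace 39 with (INR 39) by (simpl; lra).
    rewrite <- !ln_pow by lra. apply ln_increasing; [apply pow_lt; lra |].
    apply Rle_lt_trans with ((15709 / 10000) ^ 35); [apply pow_incr; lra | lra].
  - assert (59 * ln (3 / 2) < 53 * ln (PI / 2)); [| nra].
    replace 59 with (INR 59) by (simpl; lra). replace 53 with (INR 53) by (simpl; lra).
    rewrite <- !ln_pow by lra. apply ln_increasing; [apply pow_lt; lra |].
    apply Rlt_le_trans with ((15707 / 10000) ^ 53); [lra | apply pow_incr; lra].
Qed.

(* Bernoulli's inequality on [c / g] and [s / w], rescaled by [g^(1-p)] and [w^p]. *)
Lemma cos_div_lin_le_pow_p c g G : 0 < c < g -> g < 1 -> Rpower g (6 / 59) <= G ->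
  0 < G * (1 + 6 / 59 * (c * / g - 1)) /\ c / (G * (1 + 6 / 59 * (c * / g - 1))) <= Rpower c p_crit.
Proof.
  intros Hc Hg HG. pose proof p_crit_bounds. pose proof (Rpower_pos g (6 / 59)).
  assert (Hcg : 0 < c * / g < 1).
  { split; [apply Rmult_lt_0_compat; [lra | apply Rinv_0_lt_compat; lra] |].
    apply (Rmult_lt_reg_r g); [lra |]. rewrite Rmult_assoc, Rinv_l by lra. lra. }
  set (L := G * (1 + 6 / 59 * (c * / g - 1))).
  assert (HL : 0 < L) by (apply Rmult_lt_0_compat; nra).
  split; auto.
  assert (E1 : Rpower g (1 - p_crit) * Rpower (c * / g) (1 - p_crit) = Rpower c (1 - p_crit)).
  { rewrite Rpower_mult_distr by lra. f_equal. field. lra. }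
  assert (B1 : Rpower g (1 - p_crit) <= G).
  { apply Rle_trans with (Rpower g (6 / 59)); auto. apply Rpower_le_lt_1; lra. }
  assert (B2 : Rpower (c * / g) (1 - p_crit) <= 1 + 6 / 59 * (c * / g - 1)).
  { apply Rle_trans with (1 + (1 - p_crit) * (c * / g - 1)); [apply Rpower_le_bernoulli; lra | nra]. }
  pose proof (Rpower_pos g (1 - p_crit)). pose proof (Rpower_pos (c * / g) (1 - p_crit)).
  assert (B3 : Rpower c (1 - p_crit) <= L) by (rewrite <- E1; apply Rmult_le_compat; lra).
  assert (E2 : Rpower c p_crit * Rpower c (1 - p_crit) = c).
  { rewrite <- Rpower_plus. replace (p_crit + (1 - p_crit)) with 1 by ring. apply Rpower_1; lra. }
  pose proof (Rpower_pos c p_crit).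
  apply (Rmult_le_reg_r L); auto. unfold Rdiv. rewrite Rmult_assoc, Rinv_l by lra. nra.
Qed.

Lemma pow_p_le_lin s w A : 0 < s <= w -> w < 1 -> Rpower w (35 / 39) <= A ->
  Rpower s p_crit <= A * (1 + 35 / 39 * (s * / w - 1)).
Proof.
  intros Hs Hw HA. pose proof p_crit_bounds.
  assert (Hsw : 0 < s * / w <= 1).
  { split; [apply Rmult_lt_0_compat; [lra | apply Rinv_0_lt_compat; lra] |].
    apply (Rmult_le_reg_r w); [lra |]. rewrite Rmult_assoc, Rinv_l by lra. lra. }
  assert (E1 : Rpower w p_crit * Rpower (s * / w) p_crit = Rpower s p_crit).
  { rewrite Rpower_mult_distr by lra. f_equal. field. lra. }
  assert (B1 : Rpower w p_crit <= A).
  { apply Rle_trans with (Rpower w (35 / 39)); auto. apply Rpower_le_lt_1; lra. }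
  assert (B2 : Rpower (s * / w) p_crit <= 1 + 35 / 39 * (s * / w - 1)).
  { apply Rle_trans with (1 + p_crit * (s * / w - 1)); [apply Rpower_le_bernoulli; lra | nra]. }
  pose proof (Rpower_pos w p_crit). pose proof (Rpower_pos (s * / w) p_crit).
  rewrite <- E1. apply Rmult_le_compat; lra.
Qed.

Lemma Phi_p_neg_small x : 0 < x <= 21 / 20 -> Phi p_crit x < 0.
Proof.
  intros Hx. pose proof PI2_3_2. pose proof p_crit_bounds.
  apply (neg_of_deriv_neg_from_0 _ (Phi' p_crit)); [lra | apply Phi_deriv_on; lra | | apply Phi_lt_near_0; lra].
  intros c Hc. assert (Hc' : 0 < c < PI / 2) by lra.
  destruct (sin_cos_bounds c Hc') as [? [? [? ?]]].
  apply Phi'_neg; [lra | auto |].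
  pose proof (Esc_bernoulli_lt_two_cos_Dsc c ltac:(lra)). pose proof (Esc_pos c Hc').
  pose proof (Rpower_le_bernoulli p_crit (cos c) ltac:(lra) ltac:(lra)).
  assert (Rpower (cos c) p_crit <= 1 + 35 / 39 * (cos c - 1)) by nra. nra.
Qed.

Lemma Phi_p_neg_of_mid_fun w g A G x : 0 < x < PI / 2 -> 0 < w < 1 -> 0 < g < 1 ->
  Rpower w (35 / 39) <= A -> Rpower g (6 / 59) <= G ->
  0 < mid_fun w g A G x -> sin x < w * x -> cos x < g -> Phi p_crit x < 0.
Proof.
  intros Hx Hw Hg HA HG Hf Hsw Hcg. destruct (sin_cos_bounds x Hx) as [Hs [Hsx [Hc Hc1]]].
  pose proof p_crit_bounds.
  set (s := sin x / x).
  assert (Hs0 : 0 < s) by (apply Rdiv_lt_0_compat; lra).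
  assert (Hsw' : s <= w).
  { unfold s. apply (Rmult_le_reg_r x); [lra |]. unfold Rdiv; rewrite Rmult_assoc, Rinv_l; lra. }
  pose proof (pow_p_le_lin s w A (conj Hs0 Hsw') ltac:(lra) HA) as HU.
  destruct (cos_div_lin_le_pow_p (cos x) g G ltac:(lra) ltac:(lra) HG) as [HL HCL].
  set (L := G * (1 + 6 / 59 * (cos x * / g - 1))) in *.
  set (U := A * (1 + 35 / 39 * (s * / w - 1))) in *.
  assert (EF : mid_fun w g A G x = x * (cos x - (3 * U - 2) * L)) by (unfold mid_fun, U, L, s; field; lra).
  rewrite EF in Hf.
  assert (H1 : (3 * U - 2) * L < cos x) by nra.
  assert (H2 : 3 * U - 2 < cos x / L).
  { apply (Rmult_lt_reg_r L); auto. unfold Rdiv; rewrite Rmult_assoc, Rinv_l by lra. lra. }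
  assert (H3 : Rpower s p_crit < (2 + Rpower (cos x) p_crit) / 3) by lra.
  unfold Phi. fold s. rewrite <- ln_Rpower. pose proof (Rpower_pos s p_crit).
  assert (ln (Rpower s p_crit) < ln ((2 + Rpower (cos x) p_crit) / 3)) by (apply ln_increasing; lra).
  lra.
Qed.

Lemma Phi_p_neg_of_mid_bounds a b w g A G : mid_bounds a b w g A G ->
  0 < Q2R w < 1 -> 0 < Q2R g < 1 -> Q2R w ^ 35 <= Q2R A ^ 39 -> Q2R g ^ 6 <= Q2R G ^ 59 ->
  0 < Q2R A -> 0 < Q2R G -> 0 < Q2R a ->
  forall x, Q2R a < x <= Q2R b -> x < PI / 2 -> Phi p_crit x < 0.
Proof.
  intros HM Hw Hg HwA HgG HA HG Ha x Hx Hx2. destruct (HM x Hx) as [H1 [H2 H3]].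
  apply (Phi_p_neg_of_mid_fun (Q2R w) (Q2R g) (Q2R A) (Q2R G)); auto; try lra.
  - replace (35 / 39) with (INR 35 / INR 39) by (simpl; field). apply Rpower_rat_le; [lra | lra | lia | lra].
  - replace (6 / 59) with (INR 6 / INR 59) by (simpl; field). apply Rpower_rat_le; [lra | lra | lia | lra].
Qed.

Lemma Phi_p_neg_middle x : 105 / 100 < x <= 145 / 100 -> Phi p_crit x < 0.
Proof.
  intros Hx. pose proof PI2_bounds.
  destruct (Rle_dec x (115 / 100)).
  { apply (Phi_p_neg_of_mid_bounds _ _ _ _ _ _ mid_bounds_105_115); unfold Q2R; simpl; lra. }
  destruct (Rle_dec x (125 / 100)).
  { apply (Phi_p_neg_of_mid_bounds _ _ _ _ _ _ mid_bounds_115_125); unfold Q2R; simpl; lra. }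
  destruct (Rle_dec x (135 / 100)).
  { apply (Phi_p_neg_of_mid_bounds _ _ _ _ _ _ mid_bounds_125_135); unfold Q2R; simpl; lra. }
  apply (Phi_p_neg_of_mid_bounds _ _ _ _ _ _ mid_bounds_135_145); unfold Q2R; simpl; lra.
Qed.

(* At [PI/2] the gap vanishes: [p ln (2/PI) = ln (2/3)]. *)
Lemma Phi_p_lt_near_PI2 d z : 0 < d -> z < PI / 2 -> exists y, z < y < PI / 2 /\ Phi p_crit y < d.
Proof.
  intros Hd Hz. pose proof p_crit_bounds. pose proof PI2_3_2.
  set (y0 := Rmax z ((PI / 2) / (1 + d))).
  assert (Hy0 : 0 < (PI / 2) / (1 + d)) by (apply Rdiv_lt_0_compat; lra).
  assert (Hy0' : (PI / 2) / (1 + d) < PI / 2).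
  { apply (Rmult_lt_reg_r (1 + d)); [lra |]. unfold Rdiv; rewrite Rmult_assoc, Rinv_l by lra. nra. }
  pose proof (Rmax_l z ((PI / 2) / (1 + d))). pose proof (Rmax_r z ((PI / 2) / (1 + d))).
  assert (y0 < PI / 2) by (unfold y0; apply Rmax_lub_lt; lra).
  set (y := (y0 + PI / 2) / 2). exists y. split; [unfold y, y0 in *; lra |].
  assert (Hy : 0 < y < PI / 2) by (unfold y, y0 in *; lra).
  destruct (sin_cos_bounds y Hy) as [Hs [Hsx [Hc Hc1]]]. pose proof (SIN_bound y).
  assert (A1 : - ln ((2 + Rpower (cos y) p_crit) / 3) <= - ln (2 / 3)).
  { apply Ropp_le_contravar, ln_le_ln; [lra |]. pose proof (Rpower_pos (cos y) p_crit). lra. }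
  assert (A2 : ln (sin y / y) <= ln (/ y)).
  { apply ln_le_ln; [apply Rdiv_lt_0_compat; lra |]. unfold Rdiv. rewrite <- (Rmult_1_l (/ y)) at 2.
    apply Rmult_le_compat_r; [left; apply Rinv_0_lt_compat |]; lra. }
  rewrite ln_Rinv in A2 by lra.
  assert (E : - ln (2 / 3) = p_crit * (ln PI - ln 2)) by (rewrite p_crit_mul, ln_div; lra).
  assert (E2 : ln PI - ln 2 - ln y = ln (PI / (2 * y))) by (rewrite ln_div, ln_mult by lra; ring).
  pose proof (ln_le_sub_1 (PI / (2 * y)) ltac:(apply Rdiv_lt_0_compat; lra)).
  assert (Hb : PI / (2 * y) - 1 < d).
  { assert (Hyy : (PI / 2) / (1 + d) < y) by (unfold y, y0 in *; lra).
    assert (Hyy2 : PI / 2 < y * (1 + d)).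
    { replace (PI / 2) with ((PI / 2) / (1 + d) * (1 + d)) by (field; lra). apply Rmult_lt_compat_r; lra. }
    apply (Rmult_lt_reg_r (2 * y)); [lra |].
    replace ((PI / (2 * y) - 1) * (2 * y)) with (PI - 2 * y) by (field; lra). nra. }
  assert (0 <= ln (PI / (2 * y))).
  { rewrite <- ln_1. apply ln_le_ln; [lra |]. apply (Rmult_le_reg_r (2 * y)); [lra |].
    unfold Rdiv; rewrite Rmult_assoc, Rinv_l by lra. lra. }
  unfold Phi. nra.
Qed.

Lemma Phi_p_neg_near_PI2 x : 145 / 100 < x < PI / 2 -> Phi p_crit x < 0.
Proof.
  intros Hx. pose proof p_crit_bounds. pose proof PI2_3_2.
  assert (HgG : Rpower (603 / 5000) (6 / 59) <= 1613 / 2000).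
  { replace (6 / 59) with (INR 6 / INR 59) by (simpl; field). apply Rpower_rat_le; [lra | lra | lia | lra]. }
  apply (neg_of_deriv_pos_to _ (Phi' p_crit) x (PI / 2));
    [lra | intros c Hc; apply Phi_deriv; lra | | intros d z Hd Hz; apply Phi_p_lt_near_PI2; auto].
  intros c Hc. assert (Hc' : 0 < c < PI / 2) by lra.
  destruct (sin_cos_bounds c Hc') as [? [? [? ?]]].
  apply Phi'_pos; [lra | auto |].
  pose proof (two_Dsc_cos_lin_lt_Esc c ltac:(lra)). pose proof (cos_lt_near_PI2 c ltac:(lra)).
  pose proof (Esc_pos c Hc'). pose proof (Dsc_pos c Hc').
  destruct (cos_div_lin_le_pow_p (cos c) (603 / 5000) (1613 / 2000) ltac:(lra) ltac:(lra) HgG) as [HL HCL].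
  set (L := 1613 / 2000 * (1 + 6 / 59 * (cos c * / (603 / 5000) - 1))) in *.
  assert (2 * cos c * Dsc c < cos c / L * Esc c).
  { apply (Rmult_lt_reg_r L); auto. replace (cos c / L * Esc c * L) with (cos c * Esc c) by (field; lra). nra. }
  nra.
Qed.

Lemma Phi_p_neg x : 0 < x < PI / 2 -> Phi p_crit x < 0.
Proof.
  intros Hx. destruct (Rle_dec x (21 / 20)); [apply Phi_p_neg_small; lra |].
  destruct (Rle_dec x (145 / 100)); [apply Phi_p_neg_middle | apply Phi_p_neg_near_PI2]; lra.
Qed.

(** * Optimality of [4/5] *)

Lemma cos45_Esc_taylor_lt_two_cos_Dsc t : 0 < t <= 1 / 2 ->
  Rpower (cos t) (4 / 5) * Esc t * (1 - 1 / 5 * t ^ 4) < 2 * cos t * Dsc t.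
Proof.
  intros Ht. pose proof PI2_3_2. assert (Ht' : 0 < t < PI / 2) by lra.
  destruct (sin_cos_bounds t Ht') as [Hs [Hsx [Hc Hc1]]].
  pose proof (Esc5_lt_32_cos_Dsc5 t Ht). pose proof (Esc_pos t Ht'). pose proof (Dsc_pos t Ht').
  set (C := cos t) in *. set (E := Esc t) in *. set (D := Dsc t) in *. set (q := 1 - 1 / 5 * t ^ 4) in *.
  assert (Hq : 0 < q <= 1).
  { unfold q. assert (t ^ 2 <= 1 / 4) by nra. assert (t ^ 4 = t ^ 2 * t ^ 2) by ring. nra. }
  set (K := Rpower C (4 / 5) * E * q).
  assert (HK0 : 0 < K) by (unfold K; pose proof (Rpower_pos C (4 / 5)); repeat apply Rmult_lt_0_compat; lra).
  assert (Hc45 : Rpower C (4 / 5) ^ 5 = C ^ 4).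
  { rewrite <- Rpower_pow, Rpower_mult by apply Rpower_pos.
    replace (4 / 5 * INR 5) with (INR 4) by (simpl; field). apply Rpower_pow; lra. }
  destruct (Rlt_le_dec K (2 * C * D)) as [| Hn]; auto. exfalso.
  assert (Hq5 : q ^ 5 <= q).
  { pose proof (pow_incr q 1 4 ltac:(lra)) as Hq4. rewrite pow1 in Hq4.
    assert (0 <= q ^ 4) by (apply pow_le; lra). replace (q ^ 5) with (q * q ^ 4) by ring. nra. }
  assert (HK5 : K ^ 5 <= C ^ 4 * E ^ 5 * q).
  { unfold K. rewrite !Rpow_mult_distr, Hc45.
    assert (0 <= C ^ 4 * E ^ 5) by (apply Rmult_le_pos; apply pow_le; lra). nra. }
  assert (HKC : (2 * C * D) ^ 5 <= K ^ 5) by (apply pow_incr; split; [repeat apply Rmult_le_pos |]; lra).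
  assert (C ^ 4 * (E ^ 5 * q) < C ^ 4 * (32 * C * D ^ 5)) by (apply Rmult_lt_compat_l; [apply pow_lt |]; lra).
  assert ((2 * C * D) ^ 5 = C ^ 4 * (32 * C * D ^ 5)) by ring.
  nra.
Qed.

Lemma cos_pow_lt_taylor d t : 0 < d <= 1 / 5 -> 0 < t <= 1 / 2 -> t <= d ->
  Rpower (cos t) d < 1 - 1 / 5 * t ^ 4.
Proof.
  intros Hd Ht Htd. pose proof PI2_3_2.
  destruct (sin_cos_bounds t ltac:(lra)) as [Hs [Hsx [Hc Hc1]]].
  assert (HC3 : cos t <= 1 - t ^ 2 / 3).
  { pose proof (cos_le_taylor4 t ltac:(lra)). assert (t ^ 2 <= 1 / 4) by nra.
    assert (t ^ 4 = t ^ 2 * t ^ 2) by ring. nra. }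
  set (u := d * t ^ 2 / 3).
  assert (Hu : 0 <= u) by (unfold u; nra).
  assert (Hcd : Rpower (cos t) d <= exp (- u)).
  { unfold Rpower. apply exp_le_exp. pose proof (ln_le_sub_1 (cos t) Hc). unfold u. nra. }
  assert (Heu : exp (- u) * (1 + u) <= 1).
  { rewrite exp_Ropp. pose proof (exp_ineq1_le u). pose proof (exp_pos u).
    apply (Rmult_le_reg_r (exp u)); auto. replace (/ exp u * (1 + u) * exp u) with (1 + u) by (field; lra). lra. }
  assert (Hqu : 1 < (1 - 1 / 5 * t ^ 4) * (1 + u)).
  { unfold u. set (T := t ^ 2). assert (0 < T <= d / 2) by (unfold T; nra). assert (T <= 1 / 4) by (unfold T; nra).
    replace (t ^ 4) with (T * T) by (unfold T; ring).
    assert (d * (T * T) <= d * (1 / 16)) by (apply Rmult_le_compat_l; nra).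
    replace ((1 - 1 / 5 * (T * T)) * (1 + d * T / 3)) with (1 + T * (d / 3 - T / 5 - d * (T * T) / 15)) by field.
    assert (0 < T * (d / 3 - T / 5 - d * (T * T) / 15)) by (apply Rmult_lt_0_compat; lra). lra. }
  pose proof (exp_pos (- u)). nra.
Qed.

Lemma Phi'_neg_near_0 a t : 4 / 5 < a -> 0 < t <= Rmin (1 / 2) (Rmin a 1 - 4 / 5) -> Phi' a t < 0.
Proof.
  intros Ha Ht. pose proof PI2_3_2.
  pose proof (Rmin_l (1 / 2) (Rmin a 1 - 4 / 5)). pose proof (Rmin_r (1 / 2) (Rmin a 1 - 4 / 5)).
  pose proof (Rmin_l a 1). pose proof (Rmin_r a 1).
  set (d := Rmin a 1 - 4 / 5) in *.
  assert (Hd : 0 < d <= 1 / 5) by (unfold d; destruct (Rle_dec a 1); [rewrite Rmin_left | rewrite Rmin_right]; lra).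
  assert (Hda : 4 / 5 + d <= a) by (unfold d; lra).
  assert (Ht' : 0 < t < PI / 2) by lra.
  destruct (sin_cos_bounds t Ht') as [Hs [Hsx [Hc Hc1]]].
  apply Phi'_neg; [lra | auto |].
  pose proof (cos45_Esc_taylor_lt_two_cos_Dsc t ltac:(lra)).
  pose proof (cos_pow_lt_taylor d t Hd ltac:(lra) ltac:(lra)).
  pose proof (Esc_pos t Ht'). pose proof (Rpower_pos (cos t) (4 / 5)). pose proof (Rpower_pos (cos t) d).
  assert (Rpower (cos t) a <= Rpower (cos t) (4 / 5) * Rpower (cos t) d).
  { rewrite <- Rpower_plus. apply Rpower_le_lt_1; lra. }
  assert (0 < Rpower (cos t) (4 / 5) * Esc t) by (apply Rmult_lt_0_compat; lra).
  nra.
Qed.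

Lemma Phi_neg_of_gt_45 a : 4 / 5 < a -> exists x, 0 < x < PI / 2 /\ Phi a x < 0.
Proof.
  intros Ha. pose proof PI2_3_2.
  set (x := Rmin (1 / 2) (Rmin a 1 - 4 / 5)).
  assert (Hx : 0 < x <= 1 / 2).
  { pose proof (Rmin_l (1 / 2) (Rmin a 1 - 4 / 5)). split; [| auto].
    apply Rmin_glb_lt; [lra |]. apply Rlt_0_minus, Rmin_glb_lt; lra. }
  exists x. split; [lra |].
  apply (neg_of_deriv_neg_from_0 _ (Phi' a)); [lra | apply Phi_deriv_on; lra | | apply Phi_lt_near_0; lra].
  intros t Ht. apply Phi'_neg_near_0; auto. fold x. lra.
Qed.

(** * Power means *)

Definition pmean (r c : R) := Rpower ((2 + Rpower c r) / 3) (1 / r).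

Lemma power_mean_eq_pmean r c : r <> 0 -> power_mean r 1 c (2 / 3) = pmean r c.
Proof.
  intros Hr. unfold power_mean, pmean. destruct (Req_EM_T r 0) as [E | E]; [contradiction |].
  rewrite Rpower_base_1. f_equal. field.
Qed.

Lemma power_mean_0 c : power_mean 0 1 c (2 / 3) = Rpower c (1 / 3).
Proof.
  unfold power_mean. destruct (Req_EM_T 0 0) as [E | E]; [| lra].
  rewrite Rpower_base_1, Rmult_1_l. f_equal. field.
Qed.

Lemma Phi_eq_ln_sub r x : 0 < r -> Phi r x = r * (ln (sin x / x) - ln (pmean r (cos x))).
Proof. intros Hr. unfold Phi, pmean. rewrite ln_Rpower. field. lra. Qed.

Lemma pmean_lt_sinc_of_Phi_pos r x : 0 < r -> 0 < x < PI / 2 -> 0 < Phi r x -> pmean r (cos x) < sin x / x.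
Proof.
  intros Hr Hx HP. destruct (sin_cos_bounds x Hx) as [Hs [Hsx [Hc Hc1]]].
  rewrite Phi_eq_ln_sub in HP by auto.
  apply ln_lt_inv; [apply Rpower_pos | apply Rdiv_lt_0_compat; lra | nra].
Qed.

Lemma sinc_lt_pmean_of_Phi_neg r x : 0 < r -> 0 < x < PI / 2 -> Phi r x < 0 -> sin x / x < pmean r (cos x).
Proof.
  intros Hr Hx HP. destruct (sin_cos_bounds x Hx) as [Hs [Hsx [Hc Hc1]]].
  rewrite Phi_eq_ln_sub in HP by auto.
  apply ln_lt_inv; [apply Rdiv_lt_0_compat; lra | apply Rpower_pos | nra].
Qed.

(* The power-mean inequality, via Bernoulli's inequality applied to [1/m] and
   [y/m], where [m] is the mean of [1, 1, y]. *)
Lemma pmean_le_mono p b c : 0 < p <= b -> 0 < c < 1 -> pmean p c <= pmean b c.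
Proof.
  intros Hp Hc. unfold pmean.
  set (y := Rpower c b). set (t := p / b). set (m := (2 + y) / 3).
  assert (Hy : 0 < y) by apply Rpower_pos. assert (Hm : 0 < m) by (unfold m; lra).
  assert (Ecp : Rpower c p = Rpower y t) by (unfold y, t; rewrite Rpower_mult; f_equal; field; lra).
  rewrite Ecp. fold m.
  assert (Ht : 0 < t <= 1).
  { unfold t. split; [apply Rdiv_lt_0_compat; lra |].
    apply (Rmult_le_reg_r b); [lra |]. unfold Rdiv; rewrite Rmult_assoc, Rinv_l; lra. }
  assert (Hmain : (2 + Rpower y t) / 3 <= Rpower m t).
  { destruct (Req_dec t 1) as [E1 | E1]; [rewrite E1, !Rpower_1 by lra; unfold m; lra |].
    assert (E2 : Rpower m t * Rpower (/ m) t = 1).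
    { rewrite Rpower_mult_distr, Rinv_r by (try apply Rinv_0_lt_compat; lra). apply Rpower_base_1. }
    assert (E3 : Rpower m t * Rpower (y / m) t = Rpower y t).
    { rewrite Rpower_mult_distr by (try apply Rdiv_lt_0_compat; lra). f_equal. field. lra. }
    pose proof (Rpower_le_bernoulli t (/ m) ltac:(lra) ltac:(apply Rinv_0_lt_compat; lra)).
    pose proof (Rpower_le_bernoulli t (y / m) ltac:(lra) ltac:(apply Rdiv_lt_0_compat; lra)).
    pose proof (Rpower_pos m t).
    assert (2 * (1 + t * (/ m - 1)) + (1 + t * (y / m - 1)) = 3) by (unfold m; field; lra).
    rewrite <- E3. replace 2 with (2 * (Rpower m t * Rpower (/ m) t)) at 1 by (rewrite E2; ring). nra. }
  assert (0 < (2 + Rpower y t) / 3) by (pose proof (Rpower_pos y t); lra).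
  apply Rle_trans with (Rpower (Rpower m t) (1 / p)).
  - apply Rle_Rpower_l; [left; apply Rdiv_lt_0_compat |]; lra.
  - rewrite Rpower_mult. right. f_equal. unfold t. field. lra.
Qed.

Lemma ln_geometric_le_mean r c : 0 < c -> r / 3 * ln c <= ln ((2 + Rpower c r) / 3).
Proof.
  intros Hc. set (v := Rpower c (r / 3)). assert (Hv : 0 < v) by apply Rpower_pos.
  assert (Ev : v ^ 3 = Rpower c r).
  { unfold v. rewrite <- Rpower_pow, Rpower_mult by apply Rpower_pos. f_equal. simpl; field. }
  assert (v <= (2 + v ^ 3) / 3).
  { assert (0 <= (v - 1) ^ 2 * (v + 2)) by (apply Rmult_le_pos; [apply pow2_ge_0 | lra]).
    assert ((v - 1) ^ 2 * (v + 2) = v ^ 3 - 3 * v + 2) by ring. lra. }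
  rewrite <- ln_Rpower. fold v. apply ln_le_ln; [auto | rewrite <- Ev; auto].
Qed.

Lemma pmean_neg_le_cbrt r c : r < 0 -> 0 < c -> pmean r c <= Rpower c (1 / 3).
Proof.
  intros Hr Hc. unfold pmean, Rpower at 1 3. apply exp_le_exp.
  pose proof (ln_geometric_le_mean r c Hc).
  assert (1 / r < 0) by (apply Rdiv_pos_neg; lra).
  replace (1 / 3 * ln c) with (1 / r * (r / 3 * ln c)) by (field; lra).
  apply Rmult_le_compat_neg_l; lra.
Qed.

Lemma cbrt_le_pmean r c : 0 < r -> 0 < c -> Rpower c (1 / 3) <= pmean r c.
Proof.
  intros Hr Hc. unfold pmean, Rpower at 1 2. apply exp_le_exp.
  pose proof (ln_geometric_le_mean r c Hc).
  replace (1 / 3 * ln c) with (1 / r * (r / 3 * ln c)) by (field; lra).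
  apply Rmult_le_compat_l; [left; apply Rdiv_lt_0_compat |]; lra.
Qed.

(** * Optimality of [p] *)

Lemma exists_power_mean_lt_sinc_of_nonpos b : b <= 0 ->
  exists x, 0 < x < PI / 2 /\ power_mean b 1 (cos x) (2 / 3) < sin x / x.
Proof.
  intros Hb. pose proof PI2_3_2. exists (3 / 2). split; [lra |].
  destruct (sin_cos_bounds (3 / 2) ltac:(lra)) as [Hs [Hsx [Hc Hc1]]].
  pose proof (cos_le_taylor4 (3 / 2) ltac:(lra)). pose proof (sin_ge_taylor3 (3 / 2) ltac:(lra)).
  assert (Hsinc : 1 / 2 < sin (3 / 2) / (3 / 2)).
  { replace (sin (3 / 2) / (3 / 2)) with (2 / 3 * sin (3 / 2)) by field. lra. }
  assert (Hcbrt : Rpower (cos (3 / 2)) (1 / 3) <= 1 / 2).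
  { replace (1 / 3) with (INR 1 / INR 3) by (simpl; field). apply Rpower_rat_le; [lra | lra | lia |]. simpl. lra. }
  destruct (Req_dec b 0) as [-> | Hb0].
  - rewrite power_mean_0. lra.
  - rewrite power_mean_eq_pmean by lra. pose proof (pmean_neg_le_cbrt b (cos (3 / 2)) ltac:(lra) Hc). lra.
Qed.

Lemma two_div_PI_pow_gt b : 0 < b < p_crit -> 2 / 3 < Rpower (2 / PI) b.
Proof.
  intros Hb. pose proof PI2_3_2. pose proof ln_PI_sub_ln_2_pos. pose proof p_crit_mul.
  unfold Rpower. rewrite <- (exp_ln (2 / 3)) by lra. apply exp_increasing.
  rewrite !ln_div by lra. nra.
Qed.

Lemma pmean_lt_of_mean_lt_pow b c s : 0 < b -> 0 < s -> (2 + Rpower c b) / 3 < Rpower s b -> pmean b c < s.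
Proof.
  intros Hb Hs H. unfold pmean.
  assert (Es : Rpower (Rpower s b) (1 / b) = s).
  { rewrite Rpower_mult. replace (b * (1 / b)) with 1 by (field; lra). apply Rpower_1; lra. }
  rewrite <- Es. apply Rlt_Rpower_l; [apply Rdiv_lt_0_compat; lra |].
  pose proof (Rpower_pos c b). lra.
Qed.

(* Near [PI/2] with [e = PI/2 - x], the ratio [sin x / x] is at least
   [(2/PI) cos e] while [M_b(1, sin e; 2/3)] tends to [(2/3)^(1/b) < 2/PI]. *)
Lemma exists_power_mean_lt_sinc_of_lt_p b : 0 < b < p_crit ->
  exists x, 0 < x < PI / 2 /\ power_mean b 1 (cos x) (2 / 3) < sin x / x.
Proof.
  intros Hb. pose proof PI2_3_2. pose proof p_crit_bounds.
  pose proof (two_div_PI_pow_gt b Hb) as Hg. set (g := Rpower (2 / PI) b - 2 / 3) in *.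
  assert (Hg1 : Rpower (2 / PI) b < 1).
  { apply Rpower_lt_1; [split; [apply Rdiv_lt_0_compat |] | ]; try lra.
    apply (Rmult_lt_reg_r PI); [lra |]. unfold Rdiv; rewrite Rmult_assoc, Rinv_l; lra. }
  set (e := Rmin (g / 2) (Rmin (Rpower g (1 / b)) (1 / 2))).
  pose proof (Rmin_l (g / 2) (Rmin (Rpower g (1 / b)) (1 / 2))).
  pose proof (Rmin_r (g / 2) (Rmin (Rpower g (1 / b)) (1 / 2))).
  pose proof (Rmin_l (Rpower g (1 / b)) (1 / 2)). pose proof (Rmin_r (Rpower g (1 / b)) (1 / 2)).
  pose proof (Rpower_pos g (1 / b)).
  assert (He : 0 < e) by (apply Rmin_glb_lt; [unfold g in *; lra | apply Rmin_glb_lt; lra]).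
  fold e in H1, H2.
  exists (PI / 2 - e). split; [lra |].
  rewrite cos_shift, sin_shift, power_mean_eq_pmean by lra.
  destruct (sin_cos_bounds e ltac:(lra)) as [Hs [Hsx [Hc Hc1]]].
  assert (Hsin : Rpower (sin e) b <= g).
  { apply Rle_trans with (Rpower e b); [apply Rle_Rpower_l; lra |].
    apply Rle_trans with (Rpower (Rpower g (1 / b)) b); [apply Rle_Rpower_l; lra |].
    rewrite Rpower_mult. replace (1 / b * b) with 1 by (field; lra). rewrite Rpower_1; unfold g; lra. }
  set (s := cos e / (PI / 2 - e)).
  assert (Hs0 : 2 / PI * cos e <= s).
  { unfold s. assert (Hi : / (PI / 2) <= / (PI / 2 - e)) by (apply Rinv_le_contravar; lra).
    replace (/ (PI / 2)) with (2 / PI) in Hi by (field; lra). unfold Rdiv at 2. nra. }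
  assert (Hsb : Rpower (2 / PI) b * cos e <= Rpower s b).
  { apply Rle_trans with (Rpower (2 / PI * cos e) b).
    - rewrite <- Rpower_mult_distr by (try apply Rdiv_lt_0_compat; lra).
      apply Rmult_le_compat_l; [left; apply Rpower_pos |]. apply Rpower_ge_base; lra.
    - apply Rle_Rpower_l; [lra |]. split; [apply Rmult_lt_0_compat; [apply Rdiv_lt_0_compat |] |]; lra. }
  pose proof (cos_ge_taylor2 e ltac:(lra)).
  assert (1 - e <= cos e) by nra.
  apply pmean_lt_of_mean_lt_pow; [lra | unfold s; apply Rdiv_lt_0_compat; lra |].
  pose proof (Rpower_pos (2 / PI) b). unfold g in *. nra.
Qed.

Theorem corollary4p2 (alpha beta : R) :
  (forall x : R, 0 < x < PI / 2 ->
     power_mean alpha 1 (cos x) (2/3) < sin x / x /\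
     sin x / x < power_mean beta 1 (cos x) (2/3))
  <->
  (alpha <= 4/5 /\ beta >= (ln 3 - ln 2) / (ln PI - ln 2)).
Proof.
  pose proof p_crit_bounds as Hp. fold p_crit. split.
  - intros H. split.
    + destruct (Rle_dec alpha (4 / 5)) as [| Ha]; auto. exfalso.
      destruct (Phi_neg_of_gt_45 alpha ltac:(lra)) as [x [Hx HP]].
      pose proof (sinc_lt_pmean_of_Phi_neg alpha x ltac:(lra) Hx HP).
      destruct (H x Hx) as [H1 _]. rewrite power_mean_eq_pmean in H1 by lra. lra.
    + destruct (Rle_dec p_crit beta) as [| Hb]; [lra | exfalso].
      destruct (Rle_dec beta 0).
      * destruct (exists_power_mean_lt_sinc_of_nonpos beta) as [x [Hx H1]]; auto.
        destruct (H x Hx) as [_ H2]. lra.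
      * destruct (exists_power_mean_lt_sinc_of_lt_p beta ltac:(lra)) as [x [Hx H1]].
        destruct (H x Hx) as [_ H2]. lra.
  - intros [Ha Hb] x Hx. destruct (sin_cos_bounds x Hx) as [Hs [Hsx [Hc Hc1]]].
    assert (H45 : pmean (4 / 5) (cos x) < sin x / x)
      by (apply pmean_lt_sinc_of_Phi_pos, Phi_pos_of_le_45; auto; lra).
    pose proof (cbrt_le_pmean (4 / 5) (cos x) ltac:(lra) Hc).
    split.
    + destruct (Rtotal_order alpha 0) as [Hn | [-> | Hpos]].
      * rewrite power_mean_eq_pmean by lra. pose proof (pmean_neg_le_cbrt alpha (cos x) Hn Hc). lra.
      * rewrite power_mean_0. lra.
      * rewrite power_mean_eq_pmean by lra.
        apply pmean_lt_sinc_of_Phi_pos, Phi_pos_of_le_45; auto; lra.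
    + rewrite power_mean_eq_pmean by lra.
      pose proof (sinc_lt_pmean_of_Phi_neg p_crit x ltac:(lra) Hx (Phi_p_neg x Hx)).
      pose proof (pmean_le_mono p_crit beta (cos x) ltac:(lra) ltac:(lra)). lra.
Qed.
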